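(* Assume the setting below. Let $u(t,x)$ be a solution of the mature-population equation that spreads with speed $c^*/T$, i.e. $\lim_{t\to\infty}\sup_{|x|\ge ct}u(t,x)=0$ for $c>c^*/T$ and $\lim_{t\to\infty}\sup_{|x|\le ct}|u(t,x)-\bar u(t)|=0$ for $c\in(0,c^*/T)$. Let $v$ be the solution of $$\partial_tv=D_I(t)\partial_{xx}v-d_I(t)v+b(t,u(t,x))-R\big(t,u(t-\tau(t),\cdot)\big)(x)$$ with a bounded initial value $v(0,\cdot)$. Then $\lim_{t\to+\infty}\sup_{|x|\ge ct}v(x,t)=0$ for every $c>c^*/T$, and $\lim_{t\to+\infty}\sup_{|x|\le ct}|v(x,t)-\bar v(t)|=0$ for every $c\in(0,c^*/T)$.
   Context: Setting: $T>0$; $D_M,D_I\ge0$, $d_M,d_I>0$, $\tau>0$, $p\ge0$ are $C^1$ $T$-periodic; $h\in C^1([0,\infty);[0,\infty))$; $b(t,u)=p(t)h(u)$; $0<\alpha\le\beta<t_\alpha\le t_\beta<T$ with $t_\alpha-\tau(t_\alpha)=\alpha$, $t_\beta-\tau(t_\beta)=\beta$, $p=0$ on $[0,\alpha]\cup[\beta,T]$; $\tau'<1$; $h(0)=0$, $h(z)\to0$ as $z\to\infty$, $h$ increasing on $[0,z^* )$ and decreasing on $[z^*,\infty)$; $h(\lambda z)\ge\lambda h(z)$, $\lambda\in(0,1)$; $L>1$; $h$ nondecreasing on $[0,u^*]$. $k_I,k_M$ are the Green functions of $\partial_t\rho=D_I(t)\rho_{xx}-d_I(t)\rho$, resp. with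 $D_M,d_M$. $R(t,\phi)(x)=(1-\tau'(t))(k_I(t,t-\tau(t),\cdot)*b(t-\tau(t),\phi))(x)$. The mature-population equation is $\partial_tu=D_M(t)u_{xx}-d_M(t)u+R(t,u(t-\tau(t),\cdot))(x)$, with solutions determined by $u(0,\cdot)$; $Q$ is its time-$T$ map, $u^*$ the minimal positive fixed point of $Q$ restricted to constants, $\bar u(t)$ the ($T$-periodic) solution with $u(0)\equiv u^*$, and $c^*>0$ the spreading speed of $Q$. $L=\frac{\overline{k}_M(T,0)}{1-\overline{k}_M(T,0)}\int_{t_\alpha}^{t_\beta}\frac{(1-\tau'(s))e^{-\int_{s-\tau(s)}^sd_I}p(s-\tau(s))h'(0)}{\overline{k}_M(s,s-\tau(s))}ds$ with $\overline{k}_M(t,s)=e^{-\int_s^td_M}$. $\bar v(t)$ is the unique nontrivial bounded $T$-periodic, spatially constant solution of the $v$-equation with $u\equiv\bar u(t)$; explicitly $\bar v(t)=\int_0^te^{-\int_s^td_I}\big[b(s,\bar u(s))-R(s,\bar u(s-\tau(s)))\big]ds$. *)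

From Stdlib Require Import Reals.
From Coquelicot Require Import Coquelicot.
Open Scope R_scope.

Definition periodic (T : R) (f : R -> R) : Prop := forall t, f (t + T) = f t.

Definition isC1 (f : R -> R) : Prop :=
  forall t, ex_derive f t /\ continuous (Derive f) t.

Definition jcont_on (w : R -> R -> R) : Prop :=
  forall t x, 0 <= t -> forall eps, 0 < eps -> exists del, 0 < del /\
    forall t' x', 0 <= t' -> Rabs (t' - t) < del -> Rabs (x' - x) < del ->
      Rabs (w t' x' - w t x) < eps.

Definition strip_bounded (w : R -> R -> R) : Prop :=
  forall t, 0 <= t -> exists M, forall s x, 0 <= s <= t -> Rabs (w s x) <= M.

Definition regular (w : R -> R -> R) : Prop := jcont_on w /\ strip_bounded w.

Definition gauss (sig z : R) : R := exp (- (z ^ 2) / (4 * sig)) / sqrt (4 * PI * sig).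

Definition conv (k phi : R -> R) (x : R) : R :=
  RInt_gen (fun y => k (x - y) * phi y) (Rbar_locally m_infty) (Rbar_locally p_infty).

(* (k(t,s,.) * phi)(x), where k is the Green function of
   d_t rho = D(t) rho_xx - d(t) rho :
   k(t,s,x) = exp(-int_s^t d) * G_{int_s^t D}(x), and when int_s^t D = 0
   (D vanishes on [s,t]) the kernel is exp(-int_s^t d) times a Dirac mass. *)
Definition evol (D d : R -> R) (t s : R) (phi : R -> R) (x : R) : R :=
  let sig := RInt D s t in
  exp (- RInt d s t) *
  (if Rlt_dec 0 sig then conv (gauss sig) phi x else phi x).

Definition kbar (d : R -> R) (t s : R) : R := exp (- RInt d s t).

(* R(t,phi)(x) = (1 - tau'(t)) (k_I(t, t - tau t, .) * b(t - tau t, phi))(x),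
   b(t,u) = p(t) h(u) *)
Definition Rop (DI dI tau p h : R -> R) (t : R) (phi : R -> R) (x : R) : R :=
  (1 - Derive tau t) * evol DI dI t (t - tau t) (fun y => p (t - tau t) * h (phi y)) x.

(* w is the (mild, Duhamel) solution of
   d_t w = D(t) w_xx - d(t) w + F(t,x),  w(0,.) = w0 *)
Definition mild (D d : R -> R) (F : R -> R -> R) (w0 : R -> R) (w : R -> R -> R) : Prop :=
  (forall x, w 0 x = w0 x) /\
  (forall t x, 0 < t ->
     w t x = evol D d t 0 w0 x + RInt (fun s => evol D d t s (F s) x) 0 t).

(* u solves the mature-population equation
   d_t u = D_M u_xx - d_M u + R(t, u(t - tau t, .)) with u(0,.) = u0
   (values of u at negative times are irrelevant since p(t - tau t) = 0
   for t in [0, t_alpha]) *)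
Definition SolU (DM dM DI dI tau p h : R -> R) (u0 : R -> R) (u : R -> R -> R) : Prop :=
  regular u /\ (forall t x, 0 <= t -> 0 <= u t x) /\
  mild DM dM (fun s y => Rop DI dI tau p h s (u (s - tau s)) y) u0 u.

(* v solves d_t v = D_I v_xx - d_I v + b(t,u(t,x)) - R(t, u(t - tau t, .))(x),
   v(0,.) = v0 *)
Definition SolV (DI dI tau p h : R -> R) (u : R -> R -> R) (v0 : R -> R)
  (v : R -> R -> R) : Prop :=
  regular v /\
  mild DI dI (fun s y => p s * h (u s y) - Rop DI dI tau p h s (u (s - tau s)) y) v0 v.

Definition QconstFix (T : R) (DM dM DI dI tau p h : R -> R) (w : R) : Prop :=
  exists u, SolU DM dM DI dI tau p h (fun _ => w) u /\ forall x, u T x = w.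

Definition min_pos_fix (T : R) (DM dM DI dI tau p h : R -> R) (ustar : R) : Prop :=
  0 < ustar /\ QconstFix T DM dM DI dI tau p h ustar /\
  forall w, 0 < w < ustar -> ~ QconstFix T DM dM DI dI tau p h w.

(* c is the spreading speed of Q (Weinberger / Liang-Zhao), where
   Q^n[phi] = u(nT,.) for the solution u with u(0,.) = phi, and
   C_{u*} = continuous phi with 0 <= phi <= u* *)
Definition spreading_speed (T : R) (DM dM DI dI tau p h : R -> R) (ustar c : R) : Prop :=
  (forall c', c < c' -> forall phi : R -> R,
     continuity phi -> (forall x, 0 <= phi x <= ustar) ->
     (exists K, forall x, K < Rabs x -> phi x = 0) ->
     forall w, SolU DM dM DI dI tau p h phi w ->
     forall eps, 0 < eps -> exists N : nat, forall (n : nat) x, (N <= n)%nat ->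
       INR n * c' <= Rabs x -> Rabs (w (INR n * T) x) <= eps) /\
  (forall c', 0 < c' < c -> forall phi : R -> R,
     continuity phi -> (forall x, 0 <= phi x <= ustar) ->
     (exists x, phi x <> 0) ->
     forall w, SolU DM dM DI dI tau p h phi w ->
     forall eps, 0 < eps -> exists N : nat, forall (n : nat) x, (N <= n)%nat ->
       Rabs x <= INR n * c' -> Rabs (w (INR n * T) x - ustar) <= eps).

Definition Lconst (T : R) (DI dI DM dM tau p h : R -> R) (ta tb : R) : R :=
  kbar dM T 0 / (1 - kbar dM T 0) *
  RInt (fun s => (1 - Derive tau s) * exp (- RInt dI (s - tau s) s)
                   * p (s - tau s) * Derive h 0 / kbar dM s (s - tau s)) ta tb.

Definition vbar (DI dI tau p h : R -> R) (ubar : R -> R) (t : R) : R :=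
  RInt (fun s => exp (- RInt dI s t) *
          (p s * h (ubar s) - Rop DI dI tau p h s (fun _ => ubar (s - tau s)) 0)) 0 t.

(* By Duhamel's formula, v(t) is the heat evolution of v0, which is damped by the factor
   exp(-t min d_I), plus the time integral of the evolution of the source
   F_u(s) = b(s, u(s)) - R(s, u(s - tau(s))).  The same formula with u replaced by the constant
   solution \bar u produces \bar v, and with u replaced by 0 it produces 0.  After heat smoothing
   with bounded variance, F_u(s, y) only depends on u at times in [s - max tau, s] and, up to a
   small Gaussian tail, at points within a bounded distance of y.  Hence wherever u is uniformly
   close to its reference solution on a slightly wider cone, so is the source.  Splitting the time
   integral into [0, t - K] (exponentially damped) and [t - K, t] (where the Gaussian kernel is
   localised) then transfers the convergence of u on cones to v. *)
From Stdlib Require Import Reals.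
From Coquelicot Require Import Coquelicot.
Open Scope R_scope.
From Stdlib Require Import Lra Lia Psatz FunctionalExtensionality ZArith.

(* [RInt] lands in Coquelicot's module structure on R, where [ring] finds no ring instance. *)
Ltac ring_R := apply Rminus_diag_uniq; ring.

Lemma ex_RInt_cont (f : R -> R) a b : (forall x, continuous f x) -> ex_RInt f a b.
Proof. intros H; apply (ex_RInt_continuous (V:=R_CompleteNormedModule)); intros; apply H. Qed.

Lemma continuous_of_ex_derive (f : R -> R) x : ex_derive f x -> continuous f x.
Proof. apply (ex_derive_continuous (K:=R_AbsRing) (V:=R_NormedModule)). Qed.

Lemma continuity_pt_of_continuous (f : R -> R) x : continuous f x -> continuity_pt f x.
Proof. apply continuity_pt_filterlim. Qed.

Lemma continuous_of_continuity_pt (f : R -> R) x : continuity_pt f x -> continuous f x.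
Proof. apply continuity_pt_filterlim. Qed.

Lemma RInt_correct_R (f : R -> R) a b : ex_RInt f a b -> is_RInt f a b (RInt f a b).
Proof. apply (RInt_correct (V:=R_CompleteNormedModule)). Qed.

Lemma is_RInt_unique_R (f : R -> R) a b l : is_RInt f a b l -> RInt f a b = l.
Proof. apply (is_RInt_unique (V:=R_CompleteNormedModule)). Qed.

Lemma RInt_Chasles_R (f : R -> R) a b c :
  ex_RInt f a b -> ex_RInt f b c -> RInt f a b + RInt f b c = RInt f a c.
Proof. apply (RInt_Chasles (V:=R_CompleteNormedModule)). Qed.

Lemma RInt_swap_R (f : R -> R) a b : ex_RInt f a b -> RInt f b a = - RInt f a b.
Proof. intros. symmetry. apply (opp_RInt_swap (V:=R_CompleteNormedModule)); auto. Qed.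

Lemma RInt_minus_R (f g : R -> R) a b : ex_RInt f a b -> ex_RInt g a b ->
  RInt (fun x => f x - g x) a b = RInt f a b - RInt g a b.
Proof. apply (RInt_minus (V:=R_CompleteNormedModule)). Qed.

Lemma RInt_scal_R (f : R -> R) a b c :
  ex_RInt f a b -> RInt (fun x => c * f x) a b = c * RInt f a b.
Proof. apply (RInt_scal (V:=R_CompleteNormedModule)). Qed.

Lemma RInt_const_R a b c : RInt (fun _ => c) a b = c * (b - a).
Proof. rewrite RInt_const. unfold scal; simpl; unfold mult; simpl. ring. Qed.

Lemma RInt_split_at_0 (f : R -> R) a b :
  (forall z, continuous f z) -> RInt f a b = RInt f 0 b - RInt f 0 a.
Proof.
  intros Hf. rewrite <- (RInt_Chasles_R f 0 a b) by (apply ex_RInt_cont; auto). lra.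
Qed.

Lemma abs_RInt_le_RInt (f k : R -> R) a b : a <= b -> ex_RInt f a b -> ex_RInt k a b ->
  (forall x, a <= x <= b -> Rabs (f x) <= k x) -> Rabs (RInt f a b) <= RInt k a b.
Proof.
  intros Hab Hf Hk H.
  eapply Rle_trans. apply abs_RInt_le; auto.
  apply RInt_le; [auto| apply ex_RInt_norm; auto | auto | intros; apply H; lra].
Qed.

Lemma RInt_ge0_cont (f : R -> R) a b :
  a <= b -> (forall z, continuous f z) -> (forall z, 0 <= f z) -> 0 <= RInt f a b.
Proof. intros. apply RInt_ge_0; auto. apply ex_RInt_cont; auto. Qed.

Lemma RInt_le_const (f : R -> R) a b M : a <= b -> (forall z, continuous f z) ->
  (forall z, f z <= M) -> RInt f a b <= M * (b - a).
Proof.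
  intros. rewrite <- RInt_const_R. apply RInt_le; auto. apply ex_RInt_cont; auto. apply ex_RInt_const.
Qed.

Lemma RInt_ge_const (f : R -> R) a b M : a <= b -> (forall z, continuous f z) ->
  (forall z, M <= f z) -> M * (b - a) <= RInt f a b.
Proof.
  intros. rewrite <- RInt_const_R. apply RInt_le; auto. apply ex_RInt_const. apply ex_RInt_cont; auto.
Qed.

Lemma continuity_pt_RInt_upper (f : R -> R) a x :
  (forall z, continuous f z) -> continuity_pt (fun y => RInt f a y) x.
Proof.
  intros Hf. apply derivable_continuous_pt. exists (f x). apply is_derive_Reals.
  apply (is_derive_RInt (V:=R_NormedModule)) with (a := a).
  apply filter_forall; intros; apply RInt_correct_R, ex_RInt_cont; auto. auto.
Qed.

Lemma Rabs_minus_triang a b : Rabs (a - b) <= Rabs a + Rabs b.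
Proof. unfold Rminus. rewrite <- (Rabs_Ropp b). apply Rabs_triang. Qed.

Lemma exp_le_compat (x y : R) : x <= y -> exp x <= exp y.
Proof. intros [H|H]. left; apply exp_increasing, H. subst; right; reflexivity. Qed.

Lemma exp_neg_le_1 x : 0 <= x -> exp (- x) <= 1.
Proof. intros. rewrite <- exp_0. apply exp_le_compat. lra. Qed.

(** * The Gaussian integral *)

Definition expsq (t : R) := exp (- (t ^ 2)).
Definition expsq_int (x : R) := RInt expsq 0 x.
Definition expsq_aux_fun (x t : R) := exp (- (x ^ 2) * (1 + t ^ 2)) / (1 + t ^ 2).
Definition expsq_aux (x : R) := RInt (expsq_aux_fun x) 0 1.

Lemma expsq_continuous x : continuous expsq x.
Proof. apply continuous_of_ex_derive; unfold expsq; auto_derive; auto. Qed.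

Lemma expsq_int_derive x : is_derive expsq_int x (expsq x).
Proof.
  apply (is_derive_RInt (V:=R_NormedModule)) with (a := 0).
  - apply filter_forall; intros; apply RInt_correct_R, ex_RInt_cont, expsq_continuous.
  - apply expsq_continuous.
Qed.

Lemma expsq_int_ge0 x : 0 <= x -> 0 <= expsq_int x.
Proof.
  intros Hx. apply RInt_ge0_cont; auto. apply expsq_continuous.
  intros; unfold expsq; apply Rlt_le, exp_pos.
Qed.

Lemma expsq_aux_fun_derive (x t : R) :
  is_derive (fun z : R => expsq_aux_fun z t) x (-2 * x * exp (- (x ^ 2) * (1 + t ^ 2))).
Proof.
  unfold expsq_aux_fun. auto_derive; auto.
  replace (x ^ 2) with (x * (x * 1)) by ring. replace (t ^ 2) with (t * (t * 1)) by ring.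
  field. nra.
Qed.

Lemma expsq_aux_fun_continuous x t : continuous (expsq_aux_fun x) t.
Proof. apply continuous_of_ex_derive; unfold expsq_aux_fun; auto_derive; nra. Qed.

Lemma expsq_aux_fun_derive_continuous x t :
  continuity_2d_pt (fun u v => -2 * u * exp (- (u ^ 2) * (1 + v ^ 2))) x t.
Proof.
  apply continuity_2d_pt_mult.
  - apply continuity_2d_pt_mult. apply continuity_2d_pt_const. apply continuity_2d_pt_id1.
  - apply continuity_1d_2d_pt_comp with (f := exp).
    + apply derivable_continuous_pt, derivable_pt_exp.
    + apply continuity_2d_pt_mult.
      * apply continuity_2d_pt_opp. simpl.
        apply continuity_2d_pt_mult. apply continuity_2d_pt_id1.
        apply continuity_2d_pt_mult. apply continuity_2d_pt_id1. apply continuity_2d_pt_const.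
      * apply continuity_2d_pt_plus. apply continuity_2d_pt_const. simpl.
        apply continuity_2d_pt_mult. apply continuity_2d_pt_id2.
        apply continuity_2d_pt_mult. apply continuity_2d_pt_id2. apply continuity_2d_pt_const.
Qed.

(* Differentiating under the integral sign and substituting w = x t gives -2 e^{-x^2} expsq_int x. *)
Lemma expsq_aux_derive x : is_derive expsq_aux x (-2 * expsq x * expsq_int x).
Proof.
  assert (H : is_derive expsq_aux x (RInt (fun t => Derive (fun z => expsq_aux_fun z t) x) 0 1)).
  { apply (is_derive_RInt_param expsq_aux_fun 0 1 x).
    - apply filter_forall; intros; eexists; apply expsq_aux_fun_derive.
    - intros t _. eapply continuity_2d_pt_ext; [|apply (expsq_aux_fun_derive_continuous x t)].
      intros u v; simpl. symmetry; apply is_derive_unique, expsq_aux_fun_derive.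
    - apply filter_forall; intros. apply ex_RInt_cont, expsq_aux_fun_continuous. }
  replace (-2 * expsq x * expsq_int x)
    with (RInt (fun t => Derive (fun z => expsq_aux_fun z t) x) 0 1); auto.
  rewrite (RInt_ext _ (fun t => -2 * expsq x * (x * expsq (x * t + 0)))).
  2:{ intros t _. simpl. rewrite (is_derive_unique _ _ _ (expsq_aux_fun_derive x t)). unfold expsq.
      replace (- (x ^ 2) * (1 + t ^ 2)) with (- (x ^ 2) + - ((x * t + 0) ^ 2)) by ring.
      rewrite exp_plus. ring. }
  rewrite RInt_scal_R.
  - rewrite (RInt_comp_lin (V:=R_CompleteNormedModule)).
    + unfold expsq_int, scal; simpl; unfold mult; simpl. f_equal. f_equal; ring.
    + apply ex_RInt_cont, expsq_continuous.
  - apply ex_RInt_cont; intros; apply continuous_of_ex_derive; unfold expsq; auto_derive; auto.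
Qed.

Lemma expsq_aux_0 : expsq_aux 0 = PI / 4.
Proof.
  unfold expsq_aux. rewrite <- atan_1.
  replace (atan 1) with (atan 1 - atan 0) by (rewrite atan_0; ring).
  rewrite (RInt_ext _ (fun t => / (1 + t ^ 2))).
  - apply is_RInt_unique_R, (is_RInt_derive atan).
    + intros t _. apply is_derive_Reals, derivable_pt_lim_atan.
    + intros t _. apply continuous_of_ex_derive. auto_derive. nra.
  - intros t _. unfold expsq_aux_fun. rewrite pow_i by lia.
    replace (- 0 * (1 + t ^ 2)) with 0 by ring. rewrite exp_0. unfold Rdiv; apply Rmult_1_l.
Qed.

(* The classical derivative trick: the left-hand side has derivative 0. *)
Lemma expsq_int_sqr_plus_aux x : expsq_int x ^ 2 + expsq_aux x = PI / 4.
Proof.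
  assert (Hd : forall y, is_derive (fun z => expsq_int z ^ 2 + expsq_aux z) y 0).
  { intros y.
    replace 0 with (plus (INR 2 * expsq y * expsq_int y ^ 1) (-2 * expsq y * expsq_int y))
      by (unfold plus; simpl; ring).
    apply (is_derive_plus (fun z => expsq_int z ^ 2) expsq_aux).
    - apply (is_derive_pow expsq_int 2 y (expsq y)), expsq_int_derive.
    - apply expsq_aux_derive. }
  assert (HI := is_RInt_derive (fun z => expsq_int z ^ 2 + expsq_aux z) (fun _ => 0) 0 x
                  (fun y _ => Hd y) (fun y _ => continuous_const 0 y)).
  pose proof (is_RInt_unique_R _ _ _ _ HI) as E. rewrite RInt_const_R in E.
  unfold minus, plus, opp in E; simpl in E.
  assert (A0 : expsq_int 0 = 0) by apply (RInt_point (V:=R_CompleteNormedModule)).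
  rewrite A0, expsq_aux_0 in E. lra.
Qed.

Lemma expsq_aux_bounds x : 0 <= expsq_aux x <= exp (- (x ^ 2)).
Proof.
  unfold expsq_aux. split.
  - apply RInt_ge0_cont; [lra | apply expsq_aux_fun_continuous |].
    intros t; unfold expsq_aux_fun. apply Rle_mult_inv_pos. apply Rlt_le, exp_pos. nra.
  - replace (exp (- x ^ 2)) with (RInt (fun _ => exp (- x ^ 2)) 0 1) by (rewrite RInt_const_R; lra).
    apply RInt_le; [lra | apply ex_RInt_cont, expsq_aux_fun_continuous | apply ex_RInt_const |].
    intros t Ht; unfold expsq_aux_fun.
    apply Rle_trans with (exp (- (x ^ 2) * (1 + t ^ 2))).
    + unfold Rdiv. rewrite <- (Rmult_1_r (exp _)) at 2.
      apply Rmult_le_compat_l. apply Rlt_le, exp_pos.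
      rewrite <- Rinv_1. apply Rinv_le_contravar; nra.
    + apply exp_le_compat. nra.
Qed.

Lemma sqrt_PI_pos : 0 < sqrt PI.
Proof. apply sqrt_lt_R0, PI_RGT_0. Qed.

Lemma expsq_int_error x : 0 <= x ->
  Rabs (expsq_int x - sqrt PI / 2) <= exp (- (x ^ 2)) / (sqrt PI / 2).
Proof.
  intros Hx. assert (H := expsq_int_sqr_plus_aux x). assert (HB := expsq_aux_bounds x).
  assert (HA := expsq_int_ge0 x Hx). assert (Hs := sqrt_PI_pos).
  assert (Hs2 : sqrt PI * sqrt PI = PI) by (apply sqrt_sqrt; left; apply PI_RGT_0).
  apply Rmult_le_reg_r with (sqrt PI / 2). lra.
  replace (exp (- x ^ 2) / (sqrt PI / 2) * (sqrt PI / 2)) with (exp (- x ^ 2)) by (field; lra).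
  apply Rle_trans with (Rabs (expsq_int x - sqrt PI / 2) * (expsq_int x + sqrt PI / 2)).
  - apply Rmult_le_compat_l. apply Rabs_pos. lra.
  - rewrite <- (Rabs_pos_eq (expsq_int x + sqrt PI / 2)) by lra. rewrite <- Rabs_mult.
    replace ((expsq_int x - sqrt PI / 2) * (expsq_int x + sqrt PI / 2)) with (- expsq_aux x) by nra.
    rewrite Rabs_Ropp, Rabs_pos_eq by lra. lra.
Qed.

Definition gauss1 (w : R) := gauss 1 w.
Definition gauss1_prim (x : R) := RInt gauss1 0 x.

Lemma gauss1_continuous x : continuous gauss1 x.
Proof. apply continuous_of_ex_derive. unfold gauss1, gauss. auto_derive. auto. Qed.

Lemma gauss1_pos w : 0 < gauss1 w.
Proof.
  unfold gauss1, gauss. apply Rdiv_lt_0_compat. apply exp_pos.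
  apply sqrt_lt_R0. assert (0 < PI) by apply PI_RGT_0. lra.
Qed.

Lemma gauss1_even w : gauss1 (- w) = gauss1 w.
Proof. unfold gauss1, gauss. f_equal. f_equal. f_equal. f_equal. ring. Qed.

Lemma sqrt_4PI : sqrt (4 * PI * 1) = 2 * sqrt PI.
Proof.
  replace (4 * PI * 1) with ((2 * 2) * PI) by ring.
  rewrite sqrt_mult by (try lra; left; apply PI_RGT_0).
  rewrite sqrt_square by lra. ring.
Qed.

Lemma gauss1_prim_expsq_int x : gauss1_prim x = expsq_int (x / 2) / sqrt PI.
Proof.
  unfold gauss1_prim, expsq_int, gauss1, gauss. rewrite sqrt_4PI.
  assert (Hs := sqrt_PI_pos).
  rewrite (RInt_ext _ (fun w => / (2 * sqrt PI) * exp (- w ^ 2 / (4 * 1))))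
    by (intros; unfold Rdiv; ring_R).
  rewrite RInt_scal_R.
  2:{ apply ex_RInt_cont; intros; apply continuous_of_ex_derive; auto_derive; auto. }
  assert (E : RInt (fun w => exp (- w ^ 2 / (4 * 1))) 0 x = 2 * RInt expsq 0 (x / 2)).
  { rewrite <- RInt_scal_R by (apply ex_RInt_cont, expsq_continuous).
    rewrite (RInt_ext (fun y => 2 * expsq y)
               (fun y => scal 2 ((fun w => exp (- w ^ 2 / (4 * 1))) (2 * y + 0)))).
    2:{ intros; unfold expsq, scal; simpl; unfold mult; simpl. f_equal. f_equal. field. }
    rewrite (RInt_comp_lin (V:=R_CompleteNormedModule) (fun w => exp (- w ^ 2 / (4 * 1))) 2 0).
    - f_equal; field.
    - apply ex_RInt_cont; intros; apply continuous_of_ex_derive; auto_derive; auto. }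
  rewrite E. apply Rminus_diag_uniq. field. lra.
Qed.

Lemma gauss1_prim_odd x : gauss1_prim (- x) = - gauss1_prim x.
Proof.
  unfold gauss1_prim.
  transitivity (RInt gauss1 (-1 * 0 + 0) (-1 * x + 0)). f_equal; ring.
  rewrite <- (RInt_comp_lin (V:=R_CompleteNormedModule) gauss1 (-1) 0 0 x)
    by (apply ex_RInt_cont, gauss1_continuous).
  rewrite (RInt_ext _ (fun y => -1 * gauss1 y)).
  2:{ intros. unfold scal; simpl; unfold mult; simpl.
      replace (-1 * x0 + 0) with (- x0) by ring. rewrite gauss1_even. ring. }
  rewrite RInt_scal_R by (apply ex_RInt_cont, gauss1_continuous). ring_R.
Qed.

Lemma exp_neg_sqr_le_inv y : 0 < y -> exp (- (y ^ 2)) <= / y.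
Proof.
  intros Hy. assert (H := exp_ineq1_le (y ^ 2)).
  rewrite exp_Ropp. apply Rinv_le_contravar; auto. nra.
Qed.

Lemma gauss1_prim_p_infty : filterlim gauss1_prim (Rbar_locally p_infty) (locally (1 / 2)).
Proof.
  intros P [eps HP]. assert (Hs := sqrt_PI_pos).
  set (c := sqrt PI / 2 * sqrt PI). assert (Hc : 0 < c) by (unfold c; nra).
  exists (2 / (eps * c)). intros x Hx. apply HP.
  assert (Hx2 : / (eps * c) < x / 2).
  { unfold Rdiv in Hx. lra. }
  assert (Hpos : 0 < / (eps * c)) by (apply Rinv_0_lt_compat, Rmult_lt_0_compat; [apply cond_pos | lra]).
  change (Rabs (gauss1_prim x - 1 / 2) < eps).
  rewrite gauss1_prim_expsq_int.
  replace (expsq_int (x / 2) / sqrt PI - 1 / 2) with ((expsq_int (x / 2) - sqrt PI / 2) / sqrt PI)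
    by (field; lra).
  unfold Rdiv at 1. rewrite Rabs_mult, (Rabs_pos_eq (/ sqrt PI)) by (left; apply Rinv_0_lt_compat; lra).
  apply Rle_lt_trans with (/ (x / 2) / (sqrt PI / 2) * / sqrt PI).
  { apply Rmult_le_compat_r. left; apply Rinv_0_lt_compat; lra.
    eapply Rle_trans. apply expsq_int_error. lra.
    unfold Rdiv. apply Rmult_le_compat_r. left; apply Rinv_0_lt_compat; lra.
    apply exp_neg_sqr_le_inv; lra. }
  replace (/ (x / 2) / (sqrt PI / 2) * / sqrt PI) with (/ (x / 2 * c)) by (unfold c; field; lra).
  assert (0 < eps) by apply cond_pos.
  rewrite <- (Rinv_inv eps). apply Rinv_lt_contravar.
  - apply Rmult_lt_0_compat. apply Rinv_0_lt_compat; lra. apply Rmult_lt_0_compat; lra.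
  - apply Rmult_lt_reg_r with (/ c). apply Rinv_0_lt_compat; lra.
    rewrite Rinv_mult in Hx2. replace (x / 2 * c * / c) with (x / 2) by (field; lra). lra.
Qed.

Lemma gauss1_prim_m_infty : filterlim gauss1_prim (Rbar_locally m_infty) (locally (- (1 / 2))).
Proof.
  intros P [eps HP].
  destruct (gauss1_prim_p_infty (fun y => P (- y))) as [X HX].
  - exists eps. intros y Hy. apply HP. unfold ball in *; simpl in *; unfold AbsRing_ball in *.
    unfold minus, plus, opp in *; simpl in *. replace (- y + - - (1 / 2)) with (- (y + - (1 / 2))) by ring.
    rewrite Rabs_Ropp. exact Hy.
  - exists (- X). intros x Hx. rewrite <- (Ropp_involutive x), gauss1_prim_odd.
    apply HX. simpl. lra.
Qed.

(** * Improper integrals over the real line *)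

Notation Minf := (Rbar_locally m_infty).
Notation Pinf := (Rbar_locally p_infty).

Definition is_RInt_line (f : R -> R) (l : R) := is_RInt_gen (V:=R_NormedModule) f Minf Pinf l.

Lemma is_RInt_line_unique (f : R -> R) l : is_RInt_line f l -> RInt_gen f Minf Pinf = l.
Proof. apply (is_RInt_gen_unique (V:=R_CompleteNormedModule)). Qed.

Lemma is_RInt_line_of_prim (f F : R -> R) lm lp :
  (forall x, is_derive F x (f x)) -> (forall x, continuous f x) ->
  filterlim F Minf (locally lm) -> filterlim F Pinf (locally lp) -> is_RInt_line f (lp - lm).
Proof.
  intros HF Hf Hm Hp.
  assert (DF : forall x, Derive F x = f x) by (intros; apply is_derive_unique, HF).
  unfold is_RInt_line. replace f with (Derive F) by (apply functional_extensionality, DF).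
  apply (is_RInt_gen_Derive (Fa := Minf) (Fb := Pinf) F lm lp); auto.
  - apply filter_forall. intros. eexists. apply HF.
  - apply filter_forall. intros. rewrite (functional_extensionality _ _ DF). auto.
Qed.

Lemma gauss1_integral : is_RInt_line gauss1 1.
Proof.
  replace 1 with (1 / 2 - - (1 / 2)) by field.
  apply (is_RInt_line_of_prim gauss1 gauss1_prim).
  - intros. apply (is_derive_RInt (V:=R_NormedModule)) with (a := 0).
    apply filter_forall; intros; apply RInt_correct_R, ex_RInt_cont, gauss1_continuous.
    apply gauss1_continuous.
  - apply gauss1_continuous.
  - apply gauss1_prim_m_infty.
  - apply gauss1_prim_p_infty.
Qed.

Lemma abs_RInt_le_abs_RInt (f k : R -> R) a b : ex_RInt f a b -> ex_RInt k a b ->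
  (forall x, Rabs (f x) <= k x) -> Rabs (RInt f a b) <= Rabs (RInt k a b).
Proof.
  intros Hf Hk H. destruct (Rle_dec a b).
  - apply Rle_trans with (RInt k a b). apply abs_RInt_le_RInt; auto. apply Rle_abs.
  - rewrite <- (Rabs_Ropp (RInt k a b)), <- RInt_swap_R by auto.
    rewrite <- (Rabs_Ropp (RInt f a b)), <- RInt_swap_R by auto.
    apply Rle_trans with (RInt k b a). 2: apply Rle_abs.
    apply abs_RInt_le_RInt; try lra; try apply ex_RInt_swap; auto.
Qed.

Lemma is_RInt_line_window (f : R -> R) l : is_RInt_line f l -> forall eps, 0 < eps ->
  exists A, 0 < A /\ forall a b, a < - A -> A < b -> ex_RInt f a b /\ Rabs (RInt f a b - l) < eps.
Proof.
  intros H eps Heps.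
  destruct (H _ (locally_ball l (mkposreal eps Heps))) as [Q1 Q2 [M1 HQ1] [M2 HQ2] HQ].
  assert (0 <= Rabs M1) by apply Rabs_pos. assert (0 <= Rabs M2) by apply Rabs_pos.
  assert (- M1 <= Rabs M1) by (rewrite <- Rabs_Ropp; apply Rle_abs).
  assert (M2 <= Rabs M2) by apply Rle_abs.
  exists (Rabs M1 + Rabs M2 + 1). split. lra.
  intros a b Ha Hb.
  destruct (HQ a b) as [y [Hy1 Hy2]]; [apply HQ1; simpl; lra | apply HQ2; simpl; lra |].
  split. exists y; auto.
  simpl in Hy1. rewrite (is_RInt_unique_R _ _ _ _ Hy1). apply Hy2.
Qed.

Lemma is_RInt_line_Cauchy (k : R -> R) l : (forall x, continuous k x) -> is_RInt_line k l ->
  forall eps, 0 < eps -> exists A, 0 < A /\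
    (forall u v, A < u -> A < v -> Rabs (RInt k v u) < eps) /\
    (forall u v, u < - A -> v < - A -> Rabs (RInt k v u) < eps).
Proof.
  intros Hc HK eps Heps.
  assert (Hex : forall a b, ex_RInt k a b) by (intros; apply ex_RInt_cont; auto).
  destruct (is_RInt_line_window k l HK (eps / 2) ltac:(lra)) as [A [HA HW]].
  exists A. split; [auto | split].
  - intros u v Hu Hv.
    destruct (HW (- A - 1) u ltac:(lra) Hu) as [_ H1]. destruct (HW (- A - 1) v ltac:(lra) Hv) as [_ H2].
    replace (RInt k v u) with ((RInt k (- A - 1) u - l) - (RInt k (- A - 1) v - l))
      by (rewrite <- (RInt_Chasles_R k (- A - 1) v u) by auto; ring_R).
    eapply Rle_lt_trans. apply Rabs_triang. rewrite Rabs_Ropp. lra.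
  - intros u v Hu Hv.
    destruct (HW u (A + 1) Hu ltac:(lra)) as [_ H1]. destruct (HW v (A + 1) Hv ltac:(lra)) as [_ H2].
    replace (RInt k v u) with ((RInt k v (A + 1) - l) - (RInt k u (A + 1) - l))
      by (rewrite <- (RInt_Chasles_R k v u (A + 1)) by auto; ring_R).
    eapply Rle_lt_trans. apply Rabs_triang. rewrite Rabs_Ropp. lra.
Qed.

Lemma is_RInt_line_dominated (f k : R -> R) lk :
  (forall x, continuous f x) -> (forall x, continuous k x) ->
  (forall x, Rabs (f x) <= k x) -> is_RInt_line k lk -> exists l, is_RInt_line f l.
Proof.
  intros Hf Hk Hfk HK.
  set (F := fun x => RInt f 0 x).
  assert (Fdiff : forall u v, Rabs (F u - F v) <= Rabs (RInt k v u)).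
  { intros u v. unfold F. rewrite <- (RInt_Chasles_R f 0 v u) by (apply ex_RInt_cont; auto).
    replace (RInt f 0 v + RInt f v u - RInt f 0 v) with (RInt f v u) by ring_R.
    apply abs_RInt_le_abs_RInt; auto; apply ex_RInt_cont; auto. }
  assert (Lp : exists L, filterlim F Pinf (locally L)).
  { apply (filterlim_locally_cauchy (U:=R_CompleteSpace) (F:=Pinf)).
    intros eps. destruct (is_RInt_line_Cauchy k lk Hk HK eps (cond_pos eps)) as [A [HA [HA2 _]]].
    exists (fun x => A < x). split. exists A; auto.
    intros u v Hu Hv. eapply Rle_lt_trans. apply Fdiff. apply HA2; auto. }
  assert (Lm : exists L, filterlim F Minf (locally L)).
  { apply (filterlim_locally_cauchy (U:=R_CompleteSpace) (F:=Minf)).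
    intros eps. destruct (is_RInt_line_Cauchy k lk Hk HK eps (cond_pos eps)) as [A [HA [_ HA2]]].
    exists (fun x => x < - A). split. exists (- A); auto.
    intros u v Hu Hv. eapply Rle_lt_trans. apply Fdiff. apply HA2; auto. }
  destruct Lp as [Lp HLp]. destruct Lm as [Lm HLm].
  exists (Lp - Lm). apply (is_RInt_line_of_prim f F); auto.
  intros x. apply (is_derive_RInt (V:=R_NormedModule)) with (a := 0); auto.
  apply filter_forall; intros; apply RInt_correct_R, ex_RInt_cont; auto.
Qed.

Lemma is_RInt_line_affine (f : R -> R) l c y :
  is_RInt_line f l -> 0 < c -> is_RInt_line (fun z => / c * f ((y - z) / c)) l.
Proof.
  intros H Hc P HP.
  destruct (H P HP) as [Q1 Q2 [M1 HQ1] [M2 HQ2] HQ].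
  apply Filter_prod with (fun a => a < y - c * M2) (fun b => y - c * M1 < b).
  - exists (y - c * M2). auto.
  - exists (y - c * M1). auto.
  - intros a b Ha Hb. simpl.
    assert (Q1 ((y - b) / c)).
    { apply HQ1. apply Rmult_lt_reg_r with c; auto. unfold Rdiv. rewrite Rmult_assoc, Rinv_l; lra. }
    assert (Q2 ((y - a) / c)).
    { apply HQ2. apply Rmult_lt_reg_r with c; auto. unfold Rdiv. rewrite Rmult_assoc, Rinv_l; lra. }
    destruct (HQ _ _ H0 H1) as [y' [Hy1 Hy2]]. simpl in Hy1.
    exists y'. split; auto.
    apply is_RInt_swap in Hy1.
    assert (Hy3 : is_RInt f ((- / c) * a + y / c) ((- / c) * b + y / c) (opp y')).
    { replace ((- / c) * a + y / c) with ((y - a) / c) by (field; lra).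
      replace ((- / c) * b + y / c) with ((y - b) / c) by (field; lra). exact Hy1. }
    apply (is_RInt_comp_lin f) in Hy3. apply is_RInt_opp in Hy3.
    rewrite opp_opp in Hy3.
    eapply is_RInt_ext; [| exact Hy3]. intros x _. simpl.
    unfold opp, scal; simpl; unfold mult; simpl.
    replace ((y - x) / c) with (- / c * x + y / c) by (field; lra). ring.
Qed.

Lemma is_RInt_line_scal_gauss1 c : is_RInt_line (fun w => c * gauss1 w) c.
Proof.
  assert (H := is_RInt_gen_scal (V:=R_NormedModule) (Fa:=Minf) (Fb:=Pinf) gauss1 c 1 gauss1_integral).
  assert (E : scal c 1 = c) by (unfold scal; simpl; unfold mult; simpl; ring).
  exact (eq_rect _ (fun l => is_RInt_line (fun w => c * gauss1 w) l) H _ E).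
Qed.

Definition gauss1_mass (R0 : R) := RInt gauss1 (- R0) R0.

Lemma gauss1_mass_ge0 R0 : 0 <= R0 -> 0 <= gauss1_mass R0.
Proof. intros. apply RInt_ge0_cont. lra. apply gauss1_continuous. intros; left; apply gauss1_pos. Qed.

Lemma gauss1_mass_le1 R0 : gauss1_mass R0 <= 1.
Proof.
  apply le_epsilon. intros eps Heps.
  destruct (is_RInt_line_window gauss1 1 gauss1_integral eps Heps) as [A [HA HW]].
  assert (0 <= Rabs R0) by apply Rabs_pos.
  assert (R0 <= Rabs R0) by apply Rle_abs. assert (- R0 <= Rabs R0) by (rewrite <- Rabs_Ropp; apply Rle_abs).
  set (n := Rabs R0 + A + 1).
  destruct (HW (- n) n) as [_ Hn]; try (unfold n; lra).
  assert (Hex : forall a b, ex_RInt gauss1 a b) by (intros; apply ex_RInt_cont, gauss1_continuous).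
  assert (E : RInt gauss1 (- n) n = RInt gauss1 (- n) (- R0) + gauss1_mass R0 + RInt gauss1 R0 n).
  { unfold gauss1_mass. rewrite (RInt_Chasles_R gauss1 (- n) (- R0) R0), (RInt_Chasles_R gauss1 (- n) R0 n); auto. }
  assert (0 <= RInt gauss1 (- n) (- R0))
    by (apply RInt_ge0_cont; [unfold n; lra | apply gauss1_continuous | intros; left; apply gauss1_pos]).
  assert (0 <= RInt gauss1 R0 n)
    by (apply RInt_ge0_cont; [unfold n; lra | apply gauss1_continuous | intros; left; apply gauss1_pos]).
  apply Rabs_def2 in Hn. lra.
Qed.

Lemma gauss1_mass_close eps : 0 < eps -> exists R0, 0 < R0 /\ 1 - gauss1_mass R0 < eps.
Proof.
  intros Heps. destruct (is_RInt_line_window gauss1 1 gauss1_integral eps Heps) as [A [HA HW]].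
  exists (A + 1). split. lra. destruct (HW (- (A + 1)) (A + 1)) as [_ H]; try lra.
  apply Rabs_def2 in H. unfold gauss1_mass. lra.
Qed.

Lemma gauss1_tail_small a eps : 0 <= a -> 0 < eps ->
  exists R0, 0 < R0 /\ a * (1 - gauss1_mass R0) <= eps.
Proof.
  intros Ha Heps.
  destruct (gauss1_mass_close (eps / (a + 1))) as [R0 [HR0 HG]].
  { apply Rdiv_lt_0_compat; lra. }
  exists R0. split; auto.
  assert (G1 := gauss1_mass_le1 R0).
  apply Rle_trans with ((a + 1) * (eps / (a + 1))).
  - apply Rmult_le_compat; lra.
  - right. field. lra.
Qed.

Lemma is_RInt_line_truncation (f : R -> R) l M R0 :
  (forall x, continuous f x) -> (forall x, Rabs (f x) <= M * gauss1 x) -> is_RInt_line f l ->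
  0 <= R0 -> Rabs (l - RInt f (- R0) R0) <= M * (1 - gauss1_mass R0).
Proof.
  intros Hc Hdom Hf HR0.
  assert (HM : 0 <= M).
  { assert (0 <= M * gauss1 0) by (eapply Rle_trans; [apply Rabs_pos | apply Hdom]).
    assert (0 < gauss1 0) by apply gauss1_pos. nra. }
  assert (Hex : forall a b, ex_RInt f a b) by (intros; apply ex_RInt_cont; auto).
  assert (Hexg : forall a b, ex_RInt gauss1 a b) by (intros; apply ex_RInt_cont, gauss1_continuous).
  assert (Hbd : forall a b, a <= b -> Rabs (RInt f a b) <= M * RInt gauss1 a b).
  { intros a b Hab. rewrite <- RInt_scal_R by auto. apply abs_RInt_le_RInt; auto.
    apply ex_RInt_cont; intros; apply (continuous_mult (K:=R_AbsRing)).
    apply continuous_const. apply gauss1_continuous. }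
  apply le_epsilon. intros eps Heps.
  destruct (is_RInt_line_window f l Hf (eps / 2) ltac:(lra)) as [A1 [HA1 HW1]].
  destruct (is_RInt_line_window gauss1 1 gauss1_integral (eps / (2 * (M + 1)))) as [A2 [HA2 HW2]].
  { apply Rdiv_lt_0_compat; lra. }
  set (n := R0 + A1 + A2 + 1).
  destruct (HW1 (- n) n) as [_ H1]; try (unfold n; lra).
  destruct (HW2 (- n) n) as [_ H2]; try (unfold n; lra).
  assert (E : forall g, (forall a b, ex_RInt g a b) ->
            RInt g (- n) n - RInt g (- R0) R0 = RInt g (- n) (- R0) + RInt g R0 n).
  { intros g Hg. rewrite <- (RInt_Chasles_R g (- n) R0 n), <- (RInt_Chasles_R g (- n) (- R0) R0); auto.
    ring_R. }
  assert (T1 := Hbd (- n) (- R0) ltac:(unfold n; lra)).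
  assert (T2 := Hbd R0 n ltac:(unfold n; lra)).
  assert (Hsmall : M * (RInt gauss1 (- n) n - 1) <= eps / 2).
  { apply Rabs_def2 in H2.
    apply Rle_trans with (M * (eps / (2 * (M + 1)))). apply Rmult_le_compat_l; lra.
    apply Rle_trans with ((M + 1) * (eps / (2 * (M + 1)))).
    apply Rmult_le_compat_r; [left; apply Rdiv_lt_0_compat |]; lra.
    right; field; lra. }
  replace (l - RInt f (- R0) R0) with ((l - RInt f (- n) n) + (RInt f (- n) (- R0) + RInt f R0 n))
    by (rewrite <- E by auto; ring_R).
  eapply Rle_trans. apply Rabs_triang.
  eapply Rle_trans. apply Rplus_le_compat_l. apply Rabs_triang.
  rewrite Rabs_minus_sym in H1.
  assert (Eg := E gauss1 Hexg). unfold gauss1_mass. nra.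
Qed.

(** * Heat smoothing *)

(* [heat sig phi y] is the mean of phi (y - sqrt sig W) for W with density [gauss1]: for sig > 0
   it is the convolution of phi with [gauss sig] (see [gauss_smooth_heat]), and sig = 0 is allowed. *)
Definition heat_integrand (sig : R) (phi : R -> R) (y w : R) := gauss1 w * phi (y - sqrt sig * w).
Definition heat (sig : R) (phi : R -> R) (y : R) := RInt_gen (heat_integrand sig phi y) Minf Pinf.

Definition cont_bounded (phi : R -> R) (M : R) :=
  (forall z, continuous phi z) /\ (forall z, Rabs (phi z) <= M).

Lemma cont_bounded_ge0 phi M : cont_bounded phi M -> 0 <= M.
Proof. intros [_ H]. eapply Rle_trans. apply Rabs_pos. apply (H 0). Qed.

Lemma cont_bounded_minus phi1 phi2 M1 M2 : cont_bounded phi1 M1 -> cont_bounded phi2 M2 ->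
  cont_bounded (fun z => phi1 z - phi2 z) (M1 + M2).
Proof.
  intros [C1 B1] [C2 B2]. split.
  - intros z. apply (continuous_minus (K:=R_AbsRing) (V:=R_NormedModule)); auto.
  - intros z. unfold Rminus. eapply Rle_trans. apply Rabs_triang. rewrite Rabs_Ropp.
    specialize (B1 z). specialize (B2 z). lra.
Qed.

Lemma heat_integrand_continuous sig phi y w :
  (forall z, continuous phi z) -> continuous (heat_integrand sig phi y) w.
Proof.
  intros H. unfold heat_integrand.
  apply (continuous_mult (K:=R_AbsRing)). apply gauss1_continuous.
  apply (continuous_comp (fun w => y - sqrt sig * w) phi). 2: apply H.
  apply continuous_of_ex_derive. auto_derive. auto.
Qed.

Lemma heat_integrand_dominated sig phi y M w :
  cont_bounded phi M -> Rabs (heat_integrand sig phi y w) <= M * gauss1 w.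
Proof.
  intros [_ Hb]. unfold heat_integrand.
  rewrite Rabs_mult, Rmult_comm, (Rabs_pos_eq (gauss1 w)) by (left; apply gauss1_pos).
  apply Rmult_le_compat_r. left; apply gauss1_pos. apply Hb.
Qed.

Lemma heat_is_RInt_line sig phi y M :
  cont_bounded phi M -> is_RInt_line (heat_integrand sig phi y) (heat sig phi y).
Proof.
  intros Hcb.
  destruct (is_RInt_line_dominated (heat_integrand sig phi y) (fun w => M * gauss1 w) M) as [l Hl].
  - intros; apply heat_integrand_continuous, Hcb.
  - intros; apply (continuous_mult (K:=R_AbsRing)). apply continuous_const. apply gauss1_continuous.
  - intros; apply heat_integrand_dominated, Hcb.
  - apply is_RInt_line_scal_gauss1.
  - unfold heat. rewrite (is_RInt_line_unique _ _ Hl). exact Hl.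
Qed.

Lemma heat_truncation sig phi y M R0 : cont_bounded phi M -> 0 <= R0 ->
  Rabs (heat sig phi y - RInt (heat_integrand sig phi y) (- R0) R0) <= M * (1 - gauss1_mass R0).
Proof.
  intros Hcb HR0. apply is_RInt_line_truncation; auto.
  - intros; apply heat_integrand_continuous, Hcb.
  - intros; apply heat_integrand_dominated, Hcb.
  - apply (heat_is_RInt_line _ _ _ M Hcb).
Qed.

Lemma heat_close sig1 sig2 phi1 phi2 y1 y2 M1 M2 R0 e :
  cont_bounded phi1 M1 -> cont_bounded phi2 M2 -> 0 <= R0 ->
  (forall w, - R0 <= w <= R0 ->
     Rabs (phi1 (y1 - sqrt sig1 * w) - phi2 (y2 - sqrt sig2 * w)) <= e) ->
  Rabs (heat sig1 phi1 y1 - heat sig2 phi2 y2) <= e * gauss1_mass R0 + (M1 + M2) * (1 - gauss1_mass R0).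
Proof.
  intros Hcb1 Hcb2 HR0 Hloc.
  set (f1 := heat_integrand sig1 phi1 y1). set (f2 := heat_integrand sig2 phi2 y2).
  assert (Hex1 : ex_RInt f1 (- R0) R0)
    by (apply ex_RInt_cont; intros; apply heat_integrand_continuous, Hcb1).
  assert (Hex2 : ex_RInt f2 (- R0) R0)
    by (apply ex_RInt_cont; intros; apply heat_integrand_continuous, Hcb2).
  assert (T1 := heat_truncation sig1 phi1 y1 M1 R0 Hcb1 HR0).
  assert (T2 := heat_truncation sig2 phi2 y2 M2 R0 Hcb2 HR0).
  assert (Mid : Rabs (RInt f1 (- R0) R0 - RInt f2 (- R0) R0) <= e * gauss1_mass R0).
  { rewrite <- RInt_minus_R by auto. unfold gauss1_mass.
    rewrite <- RInt_scal_R by (apply ex_RInt_cont, gauss1_continuous).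
    apply abs_RInt_le_RInt. lra.
    - apply (ex_RInt_minus (V:=R_NormedModule) f1 f2); auto.
    - apply ex_RInt_cont; intros; apply (continuous_mult (K:=R_AbsRing)).
      apply continuous_const. apply gauss1_continuous.
    - intros w Hw. unfold f1, f2, heat_integrand.
      replace (gauss1 w * phi1 (y1 - sqrt sig1 * w) - gauss1 w * phi2 (y2 - sqrt sig2 * w))
        with (gauss1 w * (phi1 (y1 - sqrt sig1 * w) - phi2 (y2 - sqrt sig2 * w))) by ring.
      rewrite Rabs_mult, Rabs_pos_eq, Rmult_comm by (left; apply gauss1_pos).
      apply Rmult_le_compat_r. left; apply gauss1_pos. apply Hloc. lra. }
  replace (heat sig1 phi1 y1 - heat sig2 phi2 y2) with
    ((heat sig1 phi1 y1 - RInt f1 (- R0) R0) + (RInt f1 (- R0) R0 - RInt f2 (- R0) R0)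
     - (heat sig2 phi2 y2 - RInt f2 (- R0) R0)) by ring_R.
  unfold Rminus at 1. eapply Rle_trans. apply Rabs_triang. rewrite Rabs_Ropp.
  eapply Rle_trans. apply Rplus_le_compat_r. apply Rabs_triang.
  fold f1 in T1. fold f2 in T2. lra.
Qed.

Lemma heat_const sig c y : heat sig (fun _ => c) y = c.
Proof.
  apply is_RInt_line_unique.
  replace (heat_integrand sig (fun _ => c) y) with (fun w => c * gauss1 w).
  apply is_RInt_line_scal_gauss1.
  apply functional_extensionality; intros w. unfold heat_integrand. ring.
Qed.

Lemma cont_bounded_0 : cont_bounded (fun _ => 0) 0.
Proof. split. intros; apply continuous_const. intros; rewrite Rabs_R0; lra. Qed.

Lemma heat_local_bound sig phi y M R0 e : cont_bounded phi M -> 0 <= R0 -> 0 <= e ->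
  (forall w, - R0 <= w <= R0 -> Rabs (phi (y - sqrt sig * w)) <= e) ->
  Rabs (heat sig phi y) <= e + M * (1 - gauss1_mass R0).
Proof.
  intros Hcb HR0 He Hloc.
  assert (H := heat_close sig 0 phi (fun _ => 0) y 0 M 0 R0 e Hcb cont_bounded_0 HR0).
  rewrite heat_const, Rminus_0_r, Rplus_0_r in H.
  assert (G0 := gauss1_mass_ge0 R0 HR0). assert (G1 := gauss1_mass_le1 R0).
  assert (e * gauss1_mass R0 <= e) by nra.
  enough (Rabs (heat sig phi y) <= e * gauss1_mass R0 + M * (1 - gauss1_mass R0)) by lra.
  apply H. intros w Hw. rewrite Rminus_0_r. auto.
Qed.

Lemma heat_bound sig phi y M : cont_bounded phi M -> Rabs (heat sig phi y) <= M.
Proof.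
  intros Hcb.
  assert (H := heat_close sig 0 phi (fun _ => 0) y 0 M 0 0 M Hcb cont_bounded_0 (Rle_refl 0)).
  rewrite heat_const, Rminus_0_r, Rplus_0_r in H.
  assert (E : gauss1_mass 0 = 0).
  { unfold gauss1_mass. rewrite Ropp_0. apply (RInt_point (V:=R_CompleteNormedModule)). }
  rewrite E in H. replace M with (M * 0 + M * (1 - 0)) by ring. apply H.
  intros w _. rewrite Rminus_0_r. apply Hcb.
Qed.

Lemma heat_minus sig phi1 phi2 y M1 M2 : cont_bounded phi1 M1 -> cont_bounded phi2 M2 ->
  heat sig (fun z => phi1 z - phi2 z) y = heat sig phi1 y - heat sig phi2 y.
Proof.
  intros H1 H2.
  assert (I := is_RInt_gen_minus (V:=R_NormedModule) (Fa:=Minf) (Fb:=Pinf) _ _ _ _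
                 (heat_is_RInt_line sig phi1 y M1 H1) (heat_is_RInt_line sig phi2 y M2 H2)).
  apply is_RInt_line_unique.
  replace (heat_integrand sig (fun z => phi1 z - phi2 z) y)
    with (fun w => minus (heat_integrand sig phi1 y w) (heat_integrand sig phi2 y w)).
  exact I.
  apply functional_extensionality; intros w. unfold heat_integrand, minus, plus, opp; simpl. ring.
Qed.

Definition gauss_smooth (sig : R) (phi : R -> R) (y : R) :=
  if Rlt_dec 0 sig then conv (gauss sig) phi y else phi y.

Lemma gauss_smooth_heat sig phi y M :
  cont_bounded phi M -> 0 <= sig -> gauss_smooth sig phi y = heat sig phi y.
Proof.
  intros Hcb Hs. unfold gauss_smooth. destruct (Rlt_dec 0 sig) as [Hp|Hn].
  - unfold conv. apply is_RInt_line_unique.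
    assert (Hc : 0 < sqrt sig) by (apply sqrt_lt_R0; auto).
    assert (H := is_RInt_line_affine _ _ (sqrt sig) y (heat_is_RInt_line sig phi y M Hcb) Hc).
    replace (fun z => gauss sig (y - z) * phi z)
      with (fun z => / sqrt sig * heat_integrand sig phi y ((y - z) / sqrt sig)).
    exact H.
    apply functional_extensionality; intros z. unfold heat_integrand, gauss1, gauss.
    replace (y - sqrt sig * ((y - z) / sqrt sig)) with z by (field; lra).
    assert (E4 : sqrt (4 * PI * sig) = sqrt (4 * PI * 1) * sqrt sig).
    { rewrite Rmult_1_r. apply sqrt_mult. assert (0 < PI) by apply PI_RGT_0. lra. lra. }
    rewrite E4, sqrt_4PI.
    assert (Es : sqrt sig * sqrt sig = sig) by (apply sqrt_sqrt; lra).
    replace (((y - z) / sqrt sig) ^ 2) with ((y - z) ^ 2 / sig)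
      by (unfold Rdiv; rewrite Rpow_mult_distr, pow_inv; f_equal; f_equal; simpl; rewrite Rmult_1_r; auto).
    replace (- ((y - z) ^ 2 / sig) / (4 * 1)) with (- (y - z) ^ 2 / (4 * sig)) by (field; lra).
    assert (Hs' := sqrt_PI_pos).
    field. lra.
  - assert (sig = 0) by lra. subst sig.
    unfold heat. symmetry. apply is_RInt_line_unique.
    replace (heat_integrand 0 phi y) with (fun w => phi y * gauss1 w).
    apply is_RInt_line_scal_gauss1.
    apply functional_extensionality; intros w. unfold heat_integrand. rewrite sqrt_0.
    replace (y - 0 * w) with y by ring. ring.
Qed.

Lemma continuity_2d_pt_continuous_snd (f : R -> R -> R) x y :
  continuity_2d_pt f x y -> continuous (f x) y.
Proof.
  intros H. apply continuous_of_continuity_pt, continuity_pt_locally. intros eps.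
  destruct (H eps) as [d Hd]. exists d. intros u Hu. apply Hd; auto.
  rewrite Rminus_eq_0, Rabs_R0. apply cond_pos.
Qed.

Lemma heat_samples_close (phi : R -> R -> R) (sig : R -> R) s0 y0 R0 e :
  (forall s z, continuity_2d_pt phi s z) -> continuity_pt (fun s => sqrt (sig s)) s0 ->
  0 <= R0 -> 0 < e ->
  exists d, 0 < d /\ forall s y, Rabs (s - s0) < d -> Rabs (y - y0) < d ->
    forall w, - R0 <= w <= R0 ->
      Rabs (phi s (y - sqrt (sig s) * w) - phi s0 (y0 - sqrt (sig s0) * w)) < e.
Proof.
  intros Hc Hsq HR0 He.
  set (sq0 := sqrt (sig s0)). assert (Hsq0 : 0 <= sq0) by apply sqrt_pos.
  set (K := 1 + R0 * (sq0 + 1)).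
  destruct (uniform_continuity_2d phi (s0 - 1) (s0 + 1) (y0 - K) (y0 + K)
              (fun x y _ _ => Hc x y) (mkposreal e He)) as [du Hdu].
  assert (Hdu0 : 0 < du) by apply cond_pos.
  set (eta := Rmin 1 (du / (2 * (R0 + 1)))).
  assert (Heta : 0 < eta) by (apply Rmin_pos; [lra | apply Rdiv_lt_0_compat; lra]).
  assert (Heta1 : eta <= 1) by apply Rmin_l.
  assert (Heta2 : eta * R0 <= du / 2).
  { apply Rle_trans with (du / (2 * (R0 + 1)) * (R0 + 1)).
    apply Rmult_le_compat; try lra. apply Rmin_r.
    right. field. lra. }
  destruct (proj1 (continuity_pt_locally _ s0) Hsq (mkposreal eta Heta)) as [ds Hds].
  assert (Hds0 : 0 < ds) by apply cond_pos.
  exists (Rmin (Rmin 1 (du / 2)) ds). split. apply Rmin_pos; [apply Rmin_pos |]; lra.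
  intros s y Hs Hy w Hw.
  assert (Rmin (Rmin 1 (du / 2)) ds <= Rmin 1 (du / 2) /\ Rmin (Rmin 1 (du / 2)) ds <= ds
          /\ Rmin 1 (du / 2) <= 1 /\ Rmin 1 (du / 2) <= du / 2) as (Hm1 & Hm2 & Hm3 & Hm4)
    by (repeat split; try apply Rmin_l; apply Rmin_r).
  assert (Hsq' : Rabs (sqrt (sig s) - sq0) < eta) by (apply Hds; change (Rabs (s - s0) < ds); lra).
  set (sq := sqrt (sig s)) in *. assert (Hsq1 : 0 <= sq) by apply sqrt_pos.
  apply Rabs_def2 in Hsq'.
  assert (Hw1 : Rabs w <= R0) by (apply Rabs_le_between; lra).
  assert (Hsw : Rabs ((sq - sq0) * w) <= eta * R0)
    by (rewrite Rabs_mult; apply Rmult_le_compat; try apply Rabs_pos; auto; apply Rabs_le_between; lra).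
  assert (Hw0 : Rabs (sq0 * w) <= sq0 * R0)
    by (rewrite Rabs_mult, Rabs_pos_eq by auto; apply Rmult_le_compat_l; auto).
  assert (Hw2 : Rabs (sq * w) <= (sq0 + 1) * R0)
    by (rewrite Rabs_mult, Rabs_pos_eq by auto; apply Rmult_le_compat; auto; try apply Rabs_pos; lra).
  apply Rabs_le_between in Hw0. apply Rabs_le_between in Hw2.
  assert (HK : sq0 * R0 <= R0 * (sq0 + 1)) by nra.
  assert (Hs1 := Rabs_def2 _ _ (Rlt_le_trans _ _ _ Hs (Rle_trans _ _ _ Hm1 Hm3))).
  assert (Hy1 := Rabs_def2 _ _ (Rlt_le_trans _ _ _ Hy (Rle_trans _ _ _ Hm1 Hm3))).
  apply (Hdu s0 (y0 - sq0 * w) s (y - sq * w)); unfold K; try split; try lra.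
  replace (y - sq * w - (y0 - sq0 * w)) with ((y - y0) - (sq - sq0) * w) by ring.
  eapply Rle_lt_trans. apply Rabs_minus_triang. lra.
Qed.

Lemma heat_continuity_2d (phi : R -> R -> R) (sig : R -> R) M :
  (forall s z, continuity_2d_pt phi s z) -> (forall s z, Rabs (phi s z) <= M) ->
  (forall s, continuity_pt sig s) -> (forall s, 0 <= sig s) ->
  forall s0 y0, continuity_2d_pt (fun s y => heat (sig s) (phi s) y) s0 y0.
Proof.
  intros Hc Hb Hsc Hs0 s0 y0 eps.
  assert (Hcb : forall s, cont_bounded (phi s) M)
    by (intros s; split; [intros z; apply continuity_2d_pt_continuous_snd, Hc | intros; apply Hb]).
  assert (HM := cont_bounded_ge0 _ _ (Hcb s0)).
  assert (He : 0 < eps) by apply cond_pos.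
  destruct (gauss1_tail_small (M + M) (eps / 2)) as [R0 [HR0 HG]]; try lra.
  destruct (heat_samples_close phi sig s0 y0 R0 (eps / 4)) as [d [Hd Hclose]]; try lra; auto.
  { apply (continuity_pt_comp sig sqrt s0 (Hsc s0) (continuity_pt_sqrt _ (Hs0 s0))). }
  exists (mkposreal d Hd). intros s y Hs Hy.
  assert (G0 := gauss1_mass_ge0 R0 ltac:(lra)). assert (G1 := gauss1_mass_le1 R0).
  eapply Rle_lt_trans.
  - apply (heat_close (sig s) (sig s0) (phi s) (phi s0) y y0 M M R0 (eps / 4) (Hcb s) (Hcb s0)).
    lra. intros w Hw. left. apply Hclose; auto.
  - simpl. nra.
Qed.

Lemma continuous_of_isC1 f : isC1 f -> forall t, continuous f t.
Proof. intros H t. apply continuous_of_ex_derive, (proj1 (H t)). Qed.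

Lemma periodic_nat (f : R -> R) T : periodic T f -> forall n x, f (x + INR n * T) = f x.
Proof.
  intros H n. induction n; intros x. simpl. f_equal. ring.
  rewrite S_INR. replace (x + (INR n + 1) * T) with ((x + INR n * T) + T) by ring.
  rewrite H. apply IHn.
Qed.

Lemma periodic_Z (f : R -> R) T : periodic T f -> forall k x, f (x + IZR k * T) = f x.
Proof.
  intros H k x. destruct (Z.le_gt_cases 0 k).
  - rewrite <- (Z2Nat.id k) by lia. rewrite <- INR_IZR_INZ. apply periodic_nat; auto.
  - assert (E : k = (- Z.of_nat (Z.to_nat (- k)))%Z) by lia.
    rewrite E, opp_IZR, <- INR_IZR_INZ.
    rewrite <- (periodic_nat f T H (Z.to_nat (- k)) (x + - INR (Z.to_nat (- k)) * T)).
    f_equal. ring.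
Qed.

Lemma periodic_reduce (f : R -> R) T : periodic T f -> 0 < T ->
  forall t, exists t', 0 <= t' <= T /\ f t = f t'.
Proof.
  intros H HT t. destruct (archimed (t / T)) as [H1 H2].
  set (k := (up (t / T) - 1)%Z).
  exists (t - IZR k * T). split.
  - unfold k. rewrite minus_IZR. simpl.
    replace (t - (IZR (up (t / T)) - 1) * T) with ((t / T - (IZR (up (t / T)) - 1)) * T) by (field; lra).
    split. apply Rmult_le_pos; lra.
    apply Rle_trans with (1 * T); [apply Rmult_le_compat_r | ]; lra.
  - rewrite <- (periodic_Z f T H k (t - IZR k * T)). f_equal. ring.
Qed.

Lemma periodic_bounded_above (f : R -> R) T : periodic T f -> 0 < T ->
  (forall t, continuous f t) -> exists M, forall t, f t <= M.
Proof.
  intros H HT Hc.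
  destruct (continuity_ab_maj f 0 T ltac:(lra) (fun c _ => continuity_pt_of_continuous f c (Hc c)))
    as [Mx [HM _]].
  exists (f Mx). intros t. destruct (periodic_reduce f T H HT t) as [t' [Ht' E]].
  rewrite E. apply HM; auto.
Qed.

Lemma periodic_abs_bounded (f : R -> R) T : periodic T f -> 0 < T ->
  (forall t, continuous f t) -> exists M, forall t, Rabs (f t) <= M.
Proof.
  intros H HT Hc. apply (periodic_bounded_above (fun t => Rabs (f t)) T); auto.
  - intros t. simpl. rewrite H. auto.
  - intros t. apply continuous_Rabs_comp, Hc.
Qed.

Lemma periodic_attains_min (f : R -> R) T : periodic T f -> 0 < T ->
  (forall t, continuous f t) -> exists t0, forall t, f t0 <= f t.
Proof.
  intros H HT Hc.
  destruct (continuity_ab_min f 0 T ltac:(lra) (fun c _ => continuity_pt_of_continuous f c (Hc c)))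
    as [mx [HM _]].
  exists mx. intros t. destruct (periodic_reduce f T H HT t) as [t' [Ht' E]].
  rewrite E. apply HM; auto.
Qed.

Lemma periodic_Derive (f : R -> R) T : periodic T f -> (forall t, ex_derive f t) ->
  periodic T (Derive f).
Proof.
  intros H Hd t.
  assert (E : f = fun x => f (x + T)) by (apply functional_extensionality; intros; rewrite H; auto).
  rewrite E at 2. symmetry. apply is_derive_unique.
  replace (Derive f (t + T)) with (1 * Derive f (t + T)) by ring.
  apply (is_derive_comp f (fun x => x + T)). apply Derive_correct, Hd.
  auto_derive; auto.
Qed.

Lemma delayed_time_monotone (tau : R -> R) : isC1 tau -> (forall t, Derive tau t < 1) ->
  forall a b, a <= b -> a - tau a <= b - tau b.
Proof.
  intros H H1 a b Hab.
  destruct (MVT_gen (fun x => x - tau x) a b (fun x => 1 - Derive tau x)) as [c [_ Hc]].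
  - intros x _. apply (is_derive_minus (K:=R_AbsRing) (V:=R_NormedModule) (fun x => x) tau).
    apply (is_derive_id (K:=R_AbsRing)). apply Derive_correct, (proj1 (H x)).
  - intros x _. apply continuity_pt_of_continuous.
    apply (continuous_minus (K:=R_AbsRing) (V:=R_NormedModule) (fun x => x) tau).
    apply continuous_id. apply continuous_of_isC1; auto.
  - assert (0 < 1 - Derive tau c) by (specialize (H1 c); lra).
    assert (0 <= (1 - Derive tau c) * (b - a)) by (apply Rmult_le_pos; lra). lra.
Qed.

(* [s - tau s] runs over [beta - T, 0) when it is negative, where p vanishes by periodicity. *)
Lemma delayed_birth_rate_before_0 (T beta tb : R) (tau p : R -> R) :
  isC1 tau -> (forall t, Derive tau t < 1) -> periodic T tau -> periodic T p ->
  tb - tau tb = beta -> tb < T -> (forall t, beta <= t <= T -> p t = 0) ->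
  forall s, 0 <= s -> s - tau s < 0 -> p (s - tau s) = 0.
Proof.
  intros Htau Htau' Ptau Pp Htb HtbT Hp0 s Hs Hneg.
  assert (G := delayed_time_monotone tau Htau Htau' (tb - T) s ltac:(lra)).
  assert (E : tau (tb - T) = tau tb) by (rewrite <- (Ptau (tb - T)); f_equal; ring).
  rewrite E in G. rewrite <- Pp. apply Hp0. lra.
Qed.

Lemma bounded_nonneg_of_lim_0 (h : R -> R) : (forall z, continuous h z) -> is_lim h p_infty 0 ->
  exists Hb, forall z, 0 <= z -> Rabs (h z) <= Hb.
Proof.
  intros Hc Hl.
  destruct (Hl (fun y => Rabs y < 1)) as [A HA].
  { exists (mkposreal 1 Rlt_0_1). intros y Hy. unfold ball in Hy; simpl in Hy; unfold AbsRing_ball in Hy.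
    unfold minus, plus, opp in Hy; simpl in Hy. rewrite Ropp_0, Rplus_0_r in Hy. exact Hy. }
  destruct (continuity_ab_maj (fun z => Rabs (h z)) 0 (Rmax A 0) ltac:(apply Rmax_r)) as [Mx [HM _]].
  { intros c _. apply continuity_pt_comp with (f1 := h) (f2 := Rabs).
    apply continuity_pt_of_continuous, Hc. apply Rcontinuity_abs. }
  exists (Rmax 1 (Rabs (h Mx))). intros z Hz. destruct (Rle_dec z (Rmax A 0)).
  - apply Rle_trans with (Rabs (h Mx)). apply HM; auto. apply Rmax_r.
  - apply Rle_trans with 1. left. apply HA. assert (A <= Rmax A 0) by apply Rmax_l. simpl. lra.
    apply Rmax_l.
Qed.

Lemma unif_continuous_nonneg_of_lim_0 (h : R -> R) :
  (forall z, continuous h z) -> is_lim h p_infty 0 ->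
  forall eps, 0 < eps -> exists d, 0 < d /\ forall z1 z2, 0 <= z1 -> 0 <= z2 ->
    Rabs (z1 - z2) < d -> Rabs (h z1 - h z2) < eps.
Proof.
  intros Hc Hl eps Heps.
  destruct (Hl (fun y => Rabs y < eps / 2)) as [A HA].
  { exists (mkposreal (eps / 2) ltac:(lra)). intros y Hy. unfold ball in Hy; simpl in Hy.
    unfold AbsRing_ball in Hy; simpl in Hy.
    unfold minus, plus, opp in Hy; simpl in Hy. rewrite Ropp_0, Rplus_0_r in Hy. exact Hy. }
  set (A' := Rmax A 0 + 1).
  destruct (Heine h (fun z => 0 <= z <= A' + 1) (compact_P3 0 (A' + 1))
              (fun z _ => continuity_pt_of_continuous h z (Hc z)) (mkposreal eps Heps)) as [d Hd].
  exists (Rmin d 1). split. apply Rmin_pos. apply cond_pos. lra.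
  intros z1 z2 H1 H2 H12.
  assert (A <= Rmax A 0) by apply Rmax_l. assert (0 <= Rmax A 0) by apply Rmax_r.
  assert (Hd1 : Rabs (z1 - z2) < 1) by (eapply Rlt_le_trans; [exact H12 | apply Rmin_r]).
  apply Rabs_def2 in Hd1.
  destruct (Rle_dec z1 A') as [Ha | Ha].
  - apply Hd. split; lra. split; lra. eapply Rlt_le_trans. exact H12. apply Rmin_l.
  - assert (Rabs (h z1) < eps / 2) by (apply HA; unfold A' in Ha; simpl; lra).
    assert (Rabs (h z2) < eps / 2) by (apply HA; unfold A' in Ha; simpl; lra).
    unfold Rminus. eapply Rle_lt_trans. apply Rabs_triang. rewrite Rabs_Ropp. lra.
Qed.

Lemma jcont_on_initial (w : R -> R -> R) (w0 : R -> R) :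
  jcont_on w -> (forall x, w 0 x = w0 x) -> forall x, continuous w0 x.
Proof.
  intros Hw H0 x. apply continuous_of_continuity_pt, continuity_pt_locally. intros eps.
  destruct (Hw 0 x ltac:(lra) eps (cond_pos eps)) as [d [Hd0 Hd1]].
  exists (mkposreal d Hd0). intros y Hy. rewrite <- !H0. apply Hd1; auto; try lra.
  rewrite Rminus_eq_0, Rabs_R0; auto.
Qed.

Lemma Rmax0_lipschitz a b : Rabs (Rmax 0 a - Rmax 0 b) <= Rabs (a - b).
Proof.
  unfold Rmax. destruct (Rle_dec 0 a); destruct (Rle_dec 0 b);
  unfold Rabs; repeat destruct Rcase_abs; lra.
Qed.

Lemma continuity_pt_Rmax0 (f : R -> R) x :
  continuity_pt f x -> continuity_pt (fun t => Rmax 0 (f t)) x.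
Proof.
  intros H. apply continuity_pt_locally. intros eps.
  destruct (proj1 (continuity_pt_locally _ _) H eps) as [d Hd]. exists d. intros y Hy.
  eapply Rle_lt_trans. apply Rmax0_lipschitz. apply Hd, Hy.
Qed.

Lemma continuity_2d_pt_jcont (w : R -> R -> R) :
  jcont_on w -> forall s z, continuity_2d_pt (fun s z => w (Rmax 0 s) z) s z.
Proof.
  intros H s z eps.
  destruct (H (Rmax 0 s) z (Rmax_l 0 s) eps (cond_pos eps)) as [d [Hd Hd2]].
  exists (mkposreal d Hd). intros s' z' H1 H2. simpl in *.
  apply Hd2; auto. apply Rmax_l. eapply Rle_lt_trans. apply Rmax0_lipschitz. auto.
Qed.

Lemma continuity_2d_pt_comp_fst (f : R -> R -> R) (g : R -> R) s z :
  continuity_2d_pt f (g s) z -> continuity_pt g s -> continuity_2d_pt (fun s z => f (g s) z) s z.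
Proof.
  intros Hf Hg eps. destruct (Hf eps) as [d Hd].
  destruct (proj1 (continuity_pt_locally _ _) Hg d) as [d2 Hd2].
  assert (Hm : 0 < Rmin d d2) by (apply Rmin_pos; apply cond_pos).
  exists (mkposreal _ Hm). intros u v Hu Hv. simpl in *. apply Hd. apply Hd2.
  eapply Rlt_le_trans. exact Hu. apply Rmin_r.
  eapply Rlt_le_trans. exact Hv. apply Rmin_l.
Qed.

Lemma continuity_2d_pt_fst (a : R -> R) s z :
  continuity_pt a s -> continuity_2d_pt (fun s _ => a s) s z.
Proof.
  intros H eps. destruct (proj1 (continuity_pt_locally _ _) H eps) as [d Hd].
  exists d. intros u v Hu Hv. apply Hd, Hu.
Qed.

Lemma continuity_2d_pt_continuous_fst (f : R -> R -> R) s y :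
  continuity_2d_pt f s y -> continuity_pt (fun s => f s y) s.
Proof.
  intros H. apply continuity_pt_locally. intros eps. destruct (H eps) as [d Hd]. exists d.
  intros u Hu. apply Hd. exact Hu. rewrite Rminus_eq_0, Rabs_R0. apply cond_pos.
Qed.

(** * Cones and exponentially damped integrals *)

Definition eventually_small_on (Rg : R -> R -> Prop) (f : R -> R -> R) :=
  forall eps, 0 < eps -> exists t0, forall t x, t0 <= t -> Rg t x -> Rabs (f t x) <= eps.

Definition outer_cone (c t x : R) := c * t <= Rabs x.
Definition inner_cone (c t x : R) := Rabs x <= c * t.

Definition cone_widening (Rg : R -> R -> R -> Prop) (c c' : R) :=
  forall A K, 0 <= A -> 0 <= K -> exists t1, forall t s x z,
    t1 <= t -> t - K <= s <= t -> Rg c t x -> Rabs z <= A -> Rg c' s (x - z).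

Lemma outer_cone_widening c c' : 0 <= c' < c -> cone_widening outer_cone c c'.
Proof.
  intros Hc A K HA HK. exists (A / (c - c')). intros t s x z Ht Hs Hx Hz. unfold outer_cone in *.
  assert (A <= (c - c') * t).
  { replace A with ((c - c') * (A / (c - c'))) by (field; lra). apply Rmult_le_compat_l; lra. }
  assert (c' * s <= c' * t) by (apply Rmult_le_compat_l; lra).
  assert (Rabs x <= Rabs (x - z) + Rabs z).
  { replace x with ((x - z) + z) at 1 by ring. apply Rabs_triang. }
  lra.
Qed.

Lemma inner_cone_widening c c' : 0 <= c < c' -> cone_widening inner_cone c c'.
Proof.
  intros Hc A K HA HK. exists ((A + c' * K) / (c' - c)). intros t s x z Ht Hs Hx Hz.
  unfold inner_cone in *.
  assert (A + c' * K <= (c' - c) * t).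
  { replace (A + c' * K) with ((c' - c) * ((A + c' * K) / (c' - c))) by (field; lra).
    apply Rmult_le_compat_l; lra. }
  assert (c' * (t - K) <= c' * s) by (apply Rmult_le_compat_l; lra).
  assert (Rabs (x - z) <= Rabs x + Rabs z).
  { unfold Rminus. eapply Rle_trans. apply Rabs_triang. rewrite Rabs_Ropp. lra. }
  lra.
Qed.

Lemma mul_exp_neg_eventually_le d a eps : 0 < d -> 0 <= a -> 0 < eps ->
  exists K, 0 <= K /\ forall x, K <= x -> a * exp (- d * x) <= eps.
Proof.
  intros Hd Ha He. exists (a / (d * eps)). split.
  apply Rmult_le_pos; auto. left; apply Rinv_0_lt_compat; nra.
  intros x Hx.
  assert (Hx' : a <= d * eps * x).
  { apply Rle_trans with (d * eps * (a / (d * eps))). right; field; lra.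
    apply Rmult_le_compat_l; nra. }
  assert (H1 := exp_ineq1_le (d * x)).
  rewrite <- Ropp_mult_distr_l, exp_Ropp.
  apply Rle_trans with (a * / (1 + d * x)).
  - apply Rmult_le_compat_l; auto. apply Rinv_le_contravar; nra.
  - apply Rmult_le_reg_r with (1 + d * x). nra.
    rewrite Rmult_assoc, Rinv_l by nra. nra.
Qed.

Lemma RInt_damped_split (g : R -> R) t K B eta d : 0 < d -> 0 <= K <= t -> 0 <= B ->
  (forall s, continuous g s) ->
  (forall s, 0 <= s <= t -> Rabs (g s) <= B * exp (- d * (t - s))) ->
  (forall s, t - K <= s <= t -> Rabs (g s) <= eta) ->
  Rabs (RInt g 0 t) <= B * exp (- d * K) / d + eta * K.
Proof.
  intros Hd HK HB Hg H1 H2.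
  assert (Hex : forall a b, ex_RInt g a b) by (intros; apply ex_RInt_cont; auto).
  rewrite <- (RInt_Chasles_R g 0 (t - K) t) by auto.
  eapply Rle_trans. apply Rabs_triang. apply Rplus_le_compat.
  - set (F := fun s => B * exp (- d * (t - s)) / d).
    assert (HI : is_RInt (fun s => B * exp (- d * (t - s))) 0 (t - K) (minus (F (t - K)) (F 0))).
    { apply (is_RInt_derive (V:=R_CompleteNormedModule)).
      - intros x _. unfold F. auto_derive; auto. replace (t + - x) with (t - x) by ring. field. lra.
      - intros x _. apply continuous_of_ex_derive. auto_derive. auto. }
    eapply Rle_trans. apply abs_RInt_le_RInt. lra. auto. eexists; exact HI.
    intros; apply H1; lra.
    rewrite (is_RInt_unique_R _ _ _ _ HI). unfold F, minus, plus, opp; simpl.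
    replace (- d * (t - (t - K))) with (- d * K) by ring.
    assert (0 <= B * exp (- d * (t - 0)) / d).
    { apply Rmult_le_pos. apply Rmult_le_pos; auto. left; apply exp_pos.
      left; apply Rinv_0_lt_compat; lra. }
    lra.
  - eapply Rle_trans. apply abs_RInt_le_const. lra. auto. intros; apply H2; lra.
    right. ring.
Qed.

(** * The source term of the v-equation *)

Definition admissible (w : R -> R -> R) := jcont_on w /\ (forall t x, 0 <= t -> 0 <= w t x).

Definition const_in_space (ubar : R -> R) (t _ : R) := ubar t.

Section Source.

Variables (DI dI tau p h : R -> R) (Pm Hb Ct Dm tm dl : R).
Hypothesis HDIc : forall t, continuous DI t.
Hypothesis HdIc : forall t, continuous dI t.
Hypothesis Htauc : forall t, continuous tau t.
Hypothesis Hdtc : forall t, continuous (Derive tau) t.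
Hypothesis Hpc : forall t, continuous p t.
Hypothesis Hhc : forall z, continuous h z.
Hypothesis HDI : forall t, 0 <= DI t <= Dm.
Hypothesis HdI : forall t, dl <= dI t.
Hypothesis Hdl : 0 < dl.
Hypothesis Htau : forall t, 0 < tau t <= tm.
Hypothesis Hp : forall t, 0 <= p t <= Pm.
Hypothesis Hpz : forall s, 0 <= s -> s - tau s < 0 -> p (s - tau s) = 0.
Hypothesis Hhb : forall z, 0 <= z -> Rabs (h z) <= Hb.
Hypothesis HCt : forall t, Rabs (1 - Derive tau t) <= Ct.

Definition delay_var s := Rmax 0 (RInt DI (s - tau s) s).
Definition delay_decay s := exp (- RInt dI (s - tau s) s).
(* Solutions are only evaluated at nonnegative times; by [Hpz] the truncation is invisible
   (see [source_eq]). *)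
Definition delayed_birth (w : R -> R -> R) s z := p (s - tau s) * h (w (Rmax 0 (s - tau s)) z).
Definition source (w : R -> R -> R) s y :=
  p s * h (w (Rmax 0 s) y)
  - (1 - Derive tau s) * delay_decay s * heat (delay_var s) (delayed_birth w s) y.
Definition source_bound := Pm * Hb + Ct * (Pm * Hb).

Lemma dI_ge0 t : 0 <= dI t.
Proof. specialize (HdI t). lra. Qed.

Lemma RInt_dI_ge0 s t : s <= t -> 0 <= RInt dI s t.
Proof. intros. apply RInt_ge0_cont; auto. apply dI_ge0. Qed.

Lemma RInt_DI_ge0 s t : s <= t -> 0 <= RInt DI s t.
Proof. intros. apply RInt_ge0_cont; auto. apply HDI. Qed.

Lemma continuity_pt_RInt_delay (f : R -> R) s :
  (forall z, continuous f z) -> continuity_pt (fun s => RInt f (s - tau s) s) s.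
Proof.
  intros Hf.
  apply continuity_pt_ext with (fun s => RInt f 0 s - RInt f 0 (s - tau s)).
  { intros; symmetry; apply RInt_split_at_0; auto. }
  apply continuity_pt_minus. apply continuity_pt_RInt_upper; auto.
  apply (continuity_pt_comp (fun s => s - tau s) (fun y => RInt f 0 y)).
  - apply continuity_pt_minus. apply derivable_continuous_pt, derivable_pt_id.
    apply continuity_pt_of_continuous, Htauc.
  - apply continuity_pt_RInt_upper; auto.
Qed.

Lemma continuity_pt_RInt_lower (f : R -> R) t s :
  (forall z, continuous f z) -> continuity_pt (fun s => RInt f s t) s.
Proof.
  intros Hf.
  apply continuity_pt_ext with (fun s => RInt f 0 t - RInt f 0 s).
  { intros; symmetry; apply RInt_split_at_0; auto. }
  apply continuity_pt_minus. apply continuity_pt_const; intros a b; auto.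
  apply continuity_pt_RInt_upper; auto.
Qed.

Lemma delay_var_le s : delay_var s <= Dm * tm.
Proof.
  assert (0 <= Dm) by (destruct (HDI 0); lra). destruct (Htau s).
  unfold delay_var. apply Rmax_lub. apply Rmult_le_pos; lra.
  apply Rle_trans with (Dm * (s - (s - tau s))).
  - apply RInt_le_const; auto. lra. apply HDI.
  - apply Rmult_le_compat_l; lra.
Qed.

Lemma delay_decay_bounds s : 0 <= delay_decay s <= 1.
Proof.
  split. left; apply exp_pos. apply exp_neg_le_1, RInt_dI_ge0. destruct (Htau s); lra.
Qed.

Lemma delayed_birth_continuity_2d w : admissible w -> forall s z, continuity_2d_pt (delayed_birth w) s z.
Proof.
  intros [Hw _] s z. unfold delayed_birth.
  assert (Hd : continuity_pt (fun s => s - tau s) s).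
  { apply continuity_pt_minus. apply derivable_continuous_pt, derivable_pt_id.
    apply continuity_pt_of_continuous, Htauc. }
  apply continuity_2d_pt_mult.
  - apply continuity_2d_pt_fst. apply (continuity_pt_comp (fun s => s - tau s) p); auto.
    apply continuity_pt_of_continuous, Hpc.
  - apply continuity_1d_2d_pt_comp with (f := h). apply continuity_pt_of_continuous, Hhc.
    apply continuity_2d_pt_comp_fst with (f := fun s z => w (Rmax 0 s) z) (g := fun s => s - tau s); auto.
    apply continuity_2d_pt_jcont; auto.
Qed.

Lemma delayed_birth_cont_bounded w s : admissible w -> cont_bounded (delayed_birth w s) (Pm * Hb).
Proof.
  intros Hw. split.
  - intros z; apply continuity_2d_pt_continuous_snd, delayed_birth_continuity_2d; auto.
  - intros z. unfold delayed_birth. rewrite Rabs_mult.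
    apply Rmult_le_compat; try apply Rabs_pos.
    + rewrite Rabs_pos_eq; apply Hp.
    + apply Hhb, (proj2 Hw), Rmax_l.
Qed.

Lemma source_continuity_2d w : admissible w -> forall s y, continuity_2d_pt (source w) s y.
Proof.
  intros Hw s y. unfold source.
  apply continuity_2d_pt_minus.
  - apply continuity_2d_pt_mult. apply continuity_2d_pt_fst, continuity_pt_of_continuous, Hpc.
    apply continuity_1d_2d_pt_comp with (f := h). apply continuity_pt_of_continuous, Hhc.
    apply continuity_2d_pt_jcont, Hw.
  - apply continuity_2d_pt_mult; [apply continuity_2d_pt_fst, continuity_pt_mult |].
    + apply continuity_pt_minus. apply continuity_pt_const; intros a b; auto.
      apply continuity_pt_of_continuous, Hdtc.
    + apply (continuity_pt_comp (fun s => - RInt dI (s - tau s) s) exp).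
      apply continuity_pt_opp, continuity_pt_RInt_delay; auto.
      apply derivable_continuous_pt, derivable_pt_exp.
    + apply (heat_continuity_2d (delayed_birth w) delay_var (Pm * Hb)).
      * apply delayed_birth_continuity_2d; auto.
      * intros; apply delayed_birth_cont_bounded; auto.
      * intros; apply continuity_pt_Rmax0, continuity_pt_RInt_delay; auto.
      * intros; apply Rmax_l.
Qed.

Lemma source_cont_bounded w s : admissible w -> cont_bounded (source w s) source_bound.
Proof.
  intros Hw. split.
  - intros z; apply continuity_2d_pt_continuous_snd, source_continuity_2d; auto.
  - intros y. unfold source, source_bound, Rminus.
    eapply Rle_trans. apply Rabs_triang. rewrite Rabs_Ropp, !Rabs_mult.
    assert (HD := delay_decay_bounds s).
    assert (HS := heat_bound (delay_var s) _ y _ (delayed_birth_cont_bounded w s Hw)).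
    rewrite (Rabs_pos_eq (delay_decay s)) by lra.
    apply Rplus_le_compat.
    + apply Rmult_le_compat; try apply Rabs_pos.
      rewrite Rabs_pos_eq; apply Hp. apply Hhb, (proj2 Hw), Rmax_l.
    + assert (HC : Rabs (1 + - Derive tau s) <= Ct) by apply HCt.
      assert (0 <= Rabs (1 + - Derive tau s)) by apply Rabs_pos.
      assert (0 <= Rabs (heat (delay_var s) (delayed_birth w s) y)) by apply Rabs_pos.
      apply Rmult_le_compat; nra.
Qed.

Lemma source_eq w s y : admissible w -> 0 <= s ->
  p s * h (w s y) - Rop DI dI tau p h s (w (s - tau s)) y = source w s y.
Proof.
  intros Hw Hs. unfold source, Rop, evol.
  assert (Hsig : 0 <= RInt DI (s - tau s) s) by (apply RInt_DI_ge0; destruct (Htau s); lra).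
  assert (E : (fun y0 => p (s - tau s) * h (w (s - tau s) y0)) = delayed_birth w s).
  { apply functional_extensionality; intros z. unfold delayed_birth.
    destruct (Rle_dec 0 (s - tau s)).
    - rewrite Rmax_right by lra. auto.
    - rewrite Hpz by lra. ring. }
  fold (gauss_smooth (RInt DI (s - tau s) s) (fun y0 => p (s - tau s) * h (w (s - tau s) y0)) y).
  rewrite E, (gauss_smooth_heat _ _ _ _ (delayed_birth_cont_bounded w s Hw) Hsig).
  unfold delay_var, delay_decay. rewrite !Rmax_right by auto. ring.
Qed.

Lemma evol_heat t s phi x M : cont_bounded phi M -> s <= t ->
  evol DI dI t s phi x = exp (- RInt dI s t) * heat (Rmax 0 (RInt DI s t)) phi x.
Proof.
  intros Hcb Hst. unfold evol. fold (gauss_smooth (RInt DI s t) phi x).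
  rewrite (gauss_smooth_heat _ _ _ _ Hcb (RInt_DI_ge0 s t Hst)), Rmax_right; auto.
  apply RInt_DI_ge0; auto.
Qed.

Definition duhamel (w : R -> R -> R) t x s :=
  exp (- RInt dI s t) * heat (Rmax 0 (RInt DI s t)) (source w s) x.

Lemma duhamel_continuous w t x s : admissible w -> continuous (duhamel w t x) s.
Proof.
  intros Hw. apply continuous_of_continuity_pt. unfold duhamel. apply continuity_pt_mult.
  - apply (continuity_pt_comp (fun s => - RInt dI s t) exp).
    apply continuity_pt_opp, continuity_pt_RInt_lower; auto.
    apply derivable_continuous_pt, derivable_pt_exp.
  - apply (continuity_2d_pt_continuous_fst (fun s x => heat (Rmax 0 (RInt DI s t)) (source w s) x)).
    apply (heat_continuity_2d (source w) (fun s => Rmax 0 (RInt DI s t)) source_bound).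
    + apply source_continuity_2d; auto.
    + intros; apply source_cont_bounded; auto.
    + intros s'. apply continuity_pt_Rmax0, continuity_pt_RInt_lower; auto.
    + intros; apply Rmax_l.
Qed.

Lemma duhamel_zero t x s : h 0 = 0 -> duhamel (fun _ _ => 0) t x s = 0.
Proof.
  intros Hh0. unfold duhamel.
  replace (source (fun _ _ => 0) s) with (fun _ : R => 0). rewrite heat_const. ring.
  apply functional_extensionality; intros y. unfold source, delayed_birth. rewrite Hh0.
  replace (fun _ : R => p (s - tau s) * 0) with (fun _ : R => 0)
    by (apply functional_extensionality; intros; ring).
  rewrite heat_const. ring.
Qed.

Lemma RInt_duhamel_const ubar t x : admissible (const_in_space ubar) -> 0 <= t ->
  RInt (duhamel (const_in_space ubar) t x) 0 t = vbar DI dI tau p h ubar t.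
Proof.
  intros Hub Ht. unfold vbar. apply RInt_ext. intros s Hs. rewrite Rmin_left, Rmax_right in Hs by lra.
  unfold duhamel. f_equal.
  replace (source (const_in_space ubar) s) with (fun _ : R => source (const_in_space ubar) s 0)
    by (apply functional_extensionality; intros y; reflexivity).
  rewrite heat_const. symmetry. apply (source_eq (const_in_space ubar) s 0); auto. lra.
Qed.

Hypothesis Hhunif : forall eps, 0 < eps -> exists d, 0 < d /\ forall z1 z2, 0 <= z1 -> 0 <= z2 ->
  Rabs (z1 - z2) < d -> Rabs (h z1 - h z2) < eps.

Lemma source_bound_ge0 : 0 <= source_bound.
Proof.
  assert (0 <= Pm) by (destruct (Hp 0); lra).
  assert (0 <= Hb) by (eapply Rle_trans; [apply Rabs_pos | apply (Hhb 0); lra]).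
  assert (0 <= Ct) by (eapply Rle_trans; [apply Rabs_pos | apply (HCt 0)]).
  assert (0 <= Pm * Hb) by (apply Rmult_le_pos; auto).
  unfold source_bound. nra.
Qed.

Lemma source_diff_bound u w s y R' e1 e2 : admissible u -> admissible w -> 0 <= s -> 0 <= R' ->
  Rabs (h (u s y) - h (w s y)) <= e1 ->
  (forall w', - R' <= w' <= R' ->
     Rabs (delayed_birth u s (y - sqrt (delay_var s) * w')
           - delayed_birth w s (y - sqrt (delay_var s) * w')) <= e2) -> 0 <= e2 ->
  Rabs (source u s y - source w s y)
  <= Pm * e1 + Ct * (e2 + (Pm * Hb + Pm * Hb) * (1 - gauss1_mass R')).
Proof.
  intros Hu Hw Hs HR' H1 H2 He2.
  assert (Hbu := delayed_birth_cont_bounded u s Hu). assert (Hbw := delayed_birth_cont_bounded w s Hw).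
  assert (HS := heat_local_bound (delay_var s) _ y _ R' e2 (cont_bounded_minus _ _ _ _ Hbu Hbw) HR' He2 H2).
  unfold source. rewrite !Rmax_right by lra.
  set (A := (1 - Derive tau s) * delay_decay s).
  replace (p s * h (u s y) - A * heat (delay_var s) (delayed_birth u s) y
           - (p s * h (w s y) - A * heat (delay_var s) (delayed_birth w s) y))
    with (p s * (h (u s y) - h (w s y))
          - A * (heat (delay_var s) (delayed_birth u s) y - heat (delay_var s) (delayed_birth w s) y))
    by ring.
  rewrite <- (heat_minus _ _ _ _ _ _ Hbu Hbw).
  eapply Rle_trans. apply Rabs_minus_triang. rewrite !Rabs_mult.
  assert (HA : Rabs A <= Ct).
  { unfold A. rewrite Rabs_mult. assert (HD := delay_decay_bounds s).
    rewrite (Rabs_pos_eq (delay_decay s)) by lra.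
    assert (HC := HCt s). assert (0 <= Rabs (1 - Derive tau s)) by apply Rabs_pos. nra. }
  rewrite (Rabs_pos_eq (p s)) by apply Hp.
  apply Rplus_le_compat; apply Rmult_le_compat; auto; try apply Rabs_pos; apply Hp.
Qed.

(* The source at (s, y) sees u only at (s, y) and, through a heat kernel of variance at most
   Dm tm truncated at R', at time s - tau s within distance sqrt (Dm tm) R' of y. *)
Lemma source_diff_local u w eta : admissible u -> admissible w -> 0 < eta ->
  exists d R', 0 < d /\ 0 <= R' /\ forall s y, tm <= s ->
    Rabs (u s y - w s y) < d ->
    (forall z, Rabs (y - z) <= sqrt (Dm * tm) * R' ->
       Rabs (u (s - tau s) z - w (s - tau s) z) < d) ->
    Rabs (source u s y - source w s y) <= eta.
Proof.
  intros Hu Hw Heta.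
  assert (HPm : 0 <= Pm) by (destruct (Hp 0); lra).
  assert (HHb : 0 <= Hb) by (eapply Rle_trans; [apply Rabs_pos | apply (Hhb 0); lra]).
  assert (HCt0 : 0 <= Ct) by (eapply Rle_trans; [apply Rabs_pos | apply (HCt 0)]).
  set (eh := eta / (2 * (Pm + Ct * Pm + 1))).
  assert (Heh : 0 < eh) by (unfold eh; apply Rdiv_lt_0_compat; nra).
  assert (Hsmall : Pm * eh + Ct * (Pm * eh) <= eta / 2).
  { replace (Pm * eh + Ct * (Pm * eh)) with (eta / 2 * ((Pm + Ct * Pm) / (Pm + Ct * Pm + 1)))
      by (unfold eh; field; nra).
    assert ((Pm + Ct * Pm) / (Pm + Ct * Pm + 1) <= 1).
    { apply Rmult_le_reg_r with (Pm + Ct * Pm + 1). nra.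
      unfold Rdiv. rewrite Rmult_assoc, Rinv_l by nra. lra. }
    nra. }
  assert (HPH : 0 <= Pm * Hb) by (apply Rmult_le_pos; auto).
  destruct (gauss1_tail_small (Ct * (Pm * Hb + Pm * Hb)) (eta / 2)) as [R' [HR' HG]];
    [apply Rmult_le_pos; lra | lra |].
  destruct (Hhunif eh Heh) as [d [Hd Hhd]].
  exists d, R'. split; [auto | split; [lra |]].
  intros s y Hs H0 Hz. destruct (Htau s) as [Hts Htm].
  eapply Rle_trans.
  - apply (source_diff_bound u w s y R' eh (Pm * eh)); auto; try lra; try nra.
    + left. apply Hhd; auto; [apply (proj2 Hu) | apply (proj2 Hw)]; lra.
    + intros w' Hw'. unfold delayed_birth. rewrite Rmax_right by lra.
      rewrite <- Rmult_minus_distr_l, Rabs_mult, (Rabs_pos_eq (p _)) by apply Hp.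
      apply Rmult_le_compat; try apply Hp; try apply Rabs_pos. left.
      apply Hhd; [apply (proj2 Hu); lra | apply (proj2 Hw); lra |]. apply Hz.
      replace (y - (y - sqrt (delay_var s) * w')) with (sqrt (delay_var s) * w') by ring.
      rewrite Rabs_mult, Rabs_pos_eq by apply sqrt_pos.
      apply Rmult_le_compat; try apply sqrt_pos; try apply Rabs_pos.
      apply sqrt_le_1_alt, delay_var_le. apply Rabs_le_between; lra.
  - nra.
Qed.

Lemma exp_damping s t : s <= t -> exp (- RInt dI s t) <= exp (- dl * (t - s)).
Proof.
  intros H. apply exp_le_compat.
  assert (dl * (t - s) <= RInt dI s t) by (apply RInt_ge_const; auto). lra.
Qed.

Lemma heat_var_le s t : s <= t -> Rmax 0 (RInt DI s t) <= Dm * (t - s).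
Proof.
  intros H. assert (0 <= Dm) by (destruct (HDI 0); lra).
  apply Rmax_lub. apply Rmult_le_pos; lra. apply RInt_le_const; auto. apply HDI.
Qed.

Lemma duhamel_minus u w t x s : admissible u -> admissible w ->
  duhamel u t x s - duhamel w t x s
  = exp (- RInt dI s t) * heat (Rmax 0 (RInt DI s t)) (fun y => source u s y - source w s y) x.
Proof.
  intros Hu Hw. unfold duhamel.
  rewrite (heat_minus _ _ _ _ _ _ (source_cont_bounded u s Hu) (source_cont_bounded w s Hw)). ring.
Qed.

Lemma duhamel_diff_bound u w t x K R eta : admissible u -> admissible w ->
  0 <= K <= t -> 0 <= R -> 0 <= eta ->
  (forall s w', t - K <= s <= t -> - R <= w' <= R ->
     Rabs (source u s (x - sqrt (Rmax 0 (RInt DI s t)) * w')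
           - source w s (x - sqrt (Rmax 0 (RInt DI s t)) * w')) <= eta) ->
  Rabs (RInt (duhamel u t x) 0 t - RInt (duhamel w t x) 0 t)
  <= (source_bound + source_bound) * exp (- dl * K) / dl
     + (eta + (source_bound + source_bound) * (1 - gauss1_mass R)) * K.
Proof.
  intros Hu Hw HK HR Heta Hloc.
  assert (HB := source_bound_ge0).
  assert (Hcb : forall s, cont_bounded (fun y => source u s y - source w s y) (source_bound + source_bound))
    by (intros; apply cont_bounded_minus; apply source_cont_bounded; auto).
  rewrite <- RInt_minus_R by (apply ex_RInt_cont; intros; apply duhamel_continuous; auto).
  assert (G1 := gauss1_mass_le1 R).
  apply RInt_damped_split; auto; try lra.
  - intros s. apply (continuous_minus (K:=R_AbsRing) (V:=R_NormedModule));
      apply duhamel_continuous; auto.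
  - intros s Hs. rewrite duhamel_minus by auto.
    rewrite Rabs_mult, Rabs_pos_eq, Rmult_comm by (left; apply exp_pos).
    apply Rmult_le_compat; [apply Rabs_pos | left; apply exp_pos | apply heat_bound, Hcb |].
    apply exp_damping; lra.
  - intros s Hs. rewrite duhamel_minus by auto.
    rewrite Rabs_mult, Rabs_pos_eq by (left; apply exp_pos).
    assert (exp (- RInt dI s t) <= 1) by (apply exp_neg_le_1, RInt_dI_ge0; lra).
    assert (0 <= exp (- RInt dI s t)) by (left; apply exp_pos).
    assert (Rabs (heat (Rmax 0 (RInt DI s t)) (fun y => source u s y - source w s y) x)
            <= eta + (source_bound + source_bound) * (1 - gauss1_mass R))
      by (apply heat_local_bound; auto).
    assert (0 <= Rabs (heat (Rmax 0 (RInt DI s t)) (fun y => source u s y - source w s y) x))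
      by apply Rabs_pos.
    nra.
Qed.

Variables (u v : R -> R -> R) (v0 : R -> R).
Hypothesis Hu : admissible u.
Hypothesis Hv : SolV DI dI tau p h u v0 v.
Hypothesis Hv0 : exists M, forall x, Rabs (v0 x) <= M.

Lemma initial_cont_bounded : exists M, cont_bounded v0 M.
Proof.
  destruct Hv0 as [M HM]. destruct Hv as [[Hvj _] [Hv01 _]].
  exists M. split; auto. apply (jcont_on_initial v); auto.
Qed.

Lemma v_duhamel t x : 0 < t ->
  v t x = exp (- RInt dI 0 t) * heat (Rmax 0 (RInt DI 0 t)) v0 x + RInt (duhamel u t x) 0 t.
Proof.
  intros Ht. destruct initial_cont_bounded as [M0 HM0].
  destruct Hv as [_ [_ Hvm]]. rewrite Hvm by auto. f_equal.
  - apply (evol_heat t 0 v0 x M0); auto; lra.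
  - apply RInt_ext. intros s Hs. rewrite Rmin_left, Rmax_right in Hs by lra.
    replace (fun y => p s * h (u s y) - Rop DI dI tau p h s (u (s - tau s)) y) with (source u s)
      by (apply functional_extensionality; intros y; symmetry; apply source_eq; auto; lra).
    apply (evol_heat t s _ x source_bound). apply source_cont_bounded; auto. lra.
Qed.

Lemma initial_part_small : eventually_small_on (fun _ _ => True)
  (fun t x => exp (- RInt dI 0 t) * heat (Rmax 0 (RInt DI 0 t)) v0 x).
Proof.
  intros eps Heps. destruct initial_cont_bounded as [M0 HM0].
  destruct (mul_exp_neg_eventually_le dl M0 eps Hdl (cont_bounded_ge0 _ _ HM0) Heps) as [K [HK HKe]].
  exists K. intros t x Ht _.
  rewrite Rabs_mult, Rabs_pos_eq, Rmult_comm by (left; apply exp_pos).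
  eapply Rle_trans; [| apply (HKe t Ht)].
  apply Rmult_le_compat; [apply Rabs_pos | left; apply exp_pos | apply (heat_bound _ _ _ _ HM0) |].
  replace (- dl * t) with (- dl * (t - 0)) by ring. apply exp_damping. lra.
Qed.

Section Cones.

Variables (Rg : R -> R -> R -> Prop) (Adm : R -> Prop).
Hypothesis Hwiden : forall c, Adm c -> exists c', Adm c' /\ cone_widening Rg c c'.

Lemma source_diff_small w c : admissible w -> Adm c ->
  (forall c', Adm c' -> eventually_small_on (Rg c') (fun t x => u t x - w t x)) ->
  eventually_small_on (Rg c) (fun s y => source u s y - source w s y).
Proof.
  intros Hw Hc Huw eta Heta.
  destruct (source_diff_local u w eta Hu Hw Heta) as [d [R' [Hd [HR' Hloc]]]].
  destruct (Hwiden c Hc) as [c' [Hc' Hwid]].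
  destruct (Huw c' Hc' (d / 2) ltac:(lra)) as [t0 Ht0].
  assert (Htm : 0 < tm) by (destruct (Htau 0); lra).
  assert (HA : 0 <= sqrt (Dm * tm) * R') by (apply Rmult_le_pos; [apply sqrt_pos | lra]).
  destruct (Hwid (sqrt (Dm * tm) * R') tm HA ltac:(lra)) as [t1 Ht1].
  exists (Rabs t0 + Rabs t1 + tm). intros s y Hs Hy.
  assert (t0 <= Rabs t0) by apply Rle_abs. assert (t1 <= Rabs t1) by apply Rle_abs.
  assert (0 <= Rabs t0) by apply Rabs_pos. assert (0 <= Rabs t1) by apply Rabs_pos.
  destruct (Htau s) as [Hts Htm'].
  apply Hloc; [lra | |].
  - apply Rle_lt_trans with (d / 2); [| lra]. apply Ht0; [lra |].
    rewrite <- (Rminus_0_r y). apply (Ht1 s s y 0); try lra; auto. rewrite Rabs_R0. lra.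
  - intros z Hz. apply Rle_lt_trans with (d / 2); [| lra]. apply Ht0; [lra |].
    replace z with (y - (y - z)) by ring. apply (Ht1 s (s - tau s) y (y - z)); auto; lra.
Qed.

Lemma duhamel_diff_small w c : admissible w -> Adm c ->
  (forall c', Adm c' -> eventually_small_on (Rg c') (fun s y => source u s y - source w s y)) ->
  eventually_small_on (Rg c) (fun t x => RInt (duhamel u t x) 0 t - RInt (duhamel w t x) 0 t).
Proof.
  intros Hw Hc Hsrc eps Heps.
  set (B := source_bound + source_bound).
  assert (HB : 0 <= B) by (unfold B; assert (H := source_bound_ge0); lra).
  destruct (mul_exp_neg_eventually_le dl (B / dl) (eps / 4) Hdl) as [K [HK HKexp]]; try lra.
  { apply Rmult_le_pos; [lra | left; apply Rinv_0_lt_compat; lra]. }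
  assert (HK1 : B * exp (- dl * K) / dl <= eps / 4).
  { replace (B * exp (- dl * K) / dl) with (B / dl * exp (- dl * K)) by (field; lra).
    apply HKexp; lra. }
  set (eta := eps / (4 * (K + 1))).
  assert (Heta : 0 < eta) by (unfold eta; apply Rdiv_lt_0_compat; lra).
  assert (HetaK : (eta + eta) * K <= eps / 2).
  { apply Rle_trans with ((eta + eta) * (K + 1)). apply Rmult_le_compat_l; lra.
    unfold eta. right. field. lra. }
  destruct (Hwiden c Hc) as [c' [Hc' Hwid]].
  destruct (Hsrc c' Hc' eta Heta) as [T1 HT1].
  destruct (gauss1_tail_small B eta HB Heta) as [R [HR HG]].
  set (A := sqrt (Dm * K) * R).
  destruct (Hwid A K) as [t1 Ht1]; [unfold A; apply Rmult_le_pos; [apply sqrt_pos | lra] | lra |].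
  exists (Rabs T1 + Rabs t1 + K). intros t x Ht Hx.
  assert (T1 <= Rabs T1) by apply Rle_abs. assert (t1 <= Rabs t1) by apply Rle_abs.
  assert (0 <= Rabs T1) by apply Rabs_pos. assert (0 <= Rabs t1) by apply Rabs_pos.
  eapply Rle_trans.
  - apply (duhamel_diff_bound u w t x K R eta); auto; try lra.
    intros s w' Hs Hw'. apply HT1; [lra |]. apply (Ht1 t s x); try lra; auto.
    rewrite Rabs_mult, Rabs_pos_eq by apply sqrt_pos. unfold A.
    apply Rmult_le_compat; try apply sqrt_pos; try apply Rabs_pos.
    + apply sqrt_le_1_alt. eapply Rle_trans. apply heat_var_le; lra.
      apply Rmult_le_compat_l; [destruct (HDI 0) |]; lra.
    + apply Rabs_le_between; lra.
  - fold B. assert (eta + B * (1 - gauss1_mass R) <= eta + eta) by lra. nra.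
Qed.

Lemma v_approaches_reference w c : admissible w -> Adm c ->
  (forall c', Adm c' -> eventually_small_on (Rg c') (fun t x => u t x - w t x)) ->
  eventually_small_on (Rg c) (fun t x => v t x - RInt (duhamel w t x) 0 t).
Proof.
  intros Hw Hc Huw eps Heps.
  destruct (initial_part_small (eps / 2) ltac:(lra)) as [t0 Ht0].
  destruct (duhamel_diff_small w c Hw Hc (fun c' Hc' => source_diff_small w c' Hw Hc' Huw) (eps / 2) ltac:(lra)) as [t1 Ht1].
  exists (Rmax 1 (Rmax t0 t1)). intros t x Ht Hx.
  assert (1 <= t /\ t0 <= t /\ t1 <= t) as (? & ? & ?).
  { generalize (Rmax_l 1 (Rmax t0 t1)) (Rmax_r 1 (Rmax t0 t1)) (Rmax_l t0 t1) (Rmax_r t0 t1). lra. }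
  rewrite v_duhamel by lra.
  specialize (Ht0 t x ltac:(auto) I). specialize (Ht1 t x ltac:(auto) Hx).
  replace (exp (- RInt dI 0 t) * heat (Rmax 0 (RInt DI 0 t)) v0 x + RInt (duhamel u t x) 0 t
           - RInt (duhamel w t x) 0 t)
    with (exp (- RInt dI 0 t) * heat (Rmax 0 (RInt DI 0 t)) v0 x
          + (RInt (duhamel u t x) 0 t - RInt (duhamel w t x) 0 t)) by ring_R.
  eapply Rle_trans. apply Rabs_triang. lra.
Qed.

End Cones.
End Source.

Lemma admissible_of_SolU DM dM DI dI tau p h u0 u :
  SolU DM dM DI dI tau p h u0 u -> admissible u.
Proof. intros [[Hj _] [Hn _]]. split; auto. Qed.

Lemma admissible_zero : admissible (fun _ _ => 0).
Proof.
  split; [| intros; lra].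
  intros t x _ eps Heps. exists 1. split; [lra |]. intros. rewrite Rminus_eq_0, Rabs_R0; auto.
Qed.

Lemma eventually_small_on_eq Rg (f g : R -> R -> R) :
  (forall t x, 0 <= t -> f t x = g t x) -> eventually_small_on Rg f -> eventually_small_on Rg g.
Proof.
  intros E Hf eps Heps. destruct (Hf eps Heps) as [t0 Ht0].
  exists (Rmax 0 t0). intros t x Ht Hx.
  assert (0 <= t /\ t0 <= t) as [] by (generalize (Rmax_l 0 t0) (Rmax_r 0 t0); lra).
  rewrite <- E by auto. auto.
Qed.

Lemma outer_speeds_widen cs c : 0 < cs -> cs < c -> exists c', cs < c' /\ cone_widening outer_cone c c'.
Proof. intros. exists ((cs + c) / 2). split. lra. apply outer_cone_widening. lra. Qed.

Lemma inner_speeds_widen cs c : 0 < c < cs -> exists c', 0 < c' < cs /\ cone_widening inner_cone c c'.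
Proof. intros. exists ((c + cs) / 2). split. lra. apply inner_cone_widening. lra. Qed.

Lemma v_spreading (T cs : R) (DI dI tau p h : R -> R) (u v : R -> R -> R) (v0 ubar : R -> R) :
  0 < T -> 0 < cs ->
  periodic T DI -> periodic T dI -> periodic T tau -> periodic T p ->
  isC1 DI -> isC1 dI -> isC1 tau -> isC1 p -> isC1 h ->
  (forall t, 0 <= DI t) -> (forall t, 0 < dI t) -> (forall t, 0 < tau t) -> (forall t, 0 <= p t) ->
  (forall s, 0 <= s -> s - tau s < 0 -> p (s - tau s) = 0) -> h 0 = 0 -> is_lim h p_infty 0 ->
  admissible u -> admissible (const_in_space ubar) ->
  SolV DI dI tau p h u v0 v -> (exists M, forall x, Rabs (v0 x) <= M) ->
  (forall c, cs < c -> eventually_small_on (outer_cone c) u) ->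
  (forall c, 0 < c < cs -> eventually_small_on (inner_cone c) (fun t x => u t x - ubar t)) ->
  (forall c, cs < c -> eventually_small_on (outer_cone c) v) /\
  (forall c, 0 < c < cs ->
     eventually_small_on (inner_cone c) (fun t x => v t x - vbar DI dI tau p h ubar t)).
Proof.
  intros HT Hcs PDI PdI Ptau Pp C1DI C1dI C1tau C1p C1h HDI HdI Htau Hp Hpz Hh0 Hhlim
         Hu Hub Hv Hv0 Hout Hin.
  assert (Hdtc : forall t, continuous (Derive tau) t) by (intros t; apply (proj2 (C1tau t))).
  pose proof (continuous_of_isC1 _ C1DI) as CDI. pose proof (continuous_of_isC1 _ C1dI) as CdI.
  pose proof (continuous_of_isC1 _ C1tau) as Ctau. pose proof (continuous_of_isC1 _ C1p) as Cp.
  pose proof (continuous_of_isC1 _ C1h) as Ch.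
  destruct (periodic_bounded_above p T Pp HT Cp) as [Pm HPm].
  destruct (periodic_bounded_above DI T PDI HT CDI) as [Dm HDm].
  destruct (periodic_bounded_above tau T Ptau HT Ctau) as [tm Htm].
  destruct (periodic_attains_min dI T PdI HT CdI) as [t0 Hdl].
  destruct (periodic_abs_bounded (fun t => 1 - Derive tau t) T) as [Ct HCt]; auto.
  { intros t. rewrite (periodic_Derive tau T Ptau (fun t => proj1 (C1tau t))). auto. }
  { intros t. apply (continuous_minus (K:=R_AbsRing) (V:=R_NormedModule) (fun _ => 1) (Derive tau)).
    apply continuous_const. auto. }
  destruct (bounded_nonneg_of_lim_0 h Ch Hhlim) as [Hb HHb].
  assert (HDI' : forall t, 0 <= DI t <= Dm) by (intros t; split; auto).
  assert (Htau' : forall t, 0 < tau t <= tm) by (intros t; split; auto).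
  assert (Hp' : forall t, 0 <= p t <= Pm) by (intros t; split; auto).
  pose proof (v_approaches_reference DI dI tau p h Pm Hb Ct Dm tm (dI t0) CDI CdI Ctau Hdtc Cp Ch
    HDI' Hdl (HdI t0) Htau' Hp' Hpz HHb HCt (unif_continuous_nonneg_of_lim_0 h Ch Hhlim)
    u v v0 Hu Hv Hv0) as Hmain.
  split.
  - intros c Hc.
    apply (eventually_small_on_eq _ (fun t x => v t x - RInt (duhamel DI dI tau p h (fun _ _ => 0) t x) 0 t)).
    { intros t x _. rewrite (RInt_ext _ (fun _ => 0)), RInt_const_R by (intros; apply duhamel_zero; auto).
      ring. }
    apply (Hmain outer_cone (fun c => cs < c) (fun c => outer_speeds_widen cs c Hcs)); auto.
    apply admissible_zero.
    intros c' Hc'. apply (eventually_small_on_eq _ u); auto. intros; ring.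
  - intros c Hc.
    apply (eventually_small_on_eq _ (fun t x => v t x - RInt (duhamel DI dI tau p h (const_in_space ubar) t x) 0 t)).
    { intros t x Ht. f_equal. eapply RInt_duhamel_const; eauto. }
    apply (Hmain inner_cone (fun c => 0 < c < cs) (inner_speeds_widen cs)); auto.
Qed.
Theorem theorem5p4
  (T : R) (DM DI dM dI tau p h : R -> R)
  (alpha beta ta tb zstar ustar cstar : R) (ubar : R -> R)
  (u : R -> R -> R) (v0 : R -> R) (v : R -> R -> R)
  (* coefficients *)
  (HT : 0 < T)
  (HC1 : isC1 DM /\ isC1 DI /\ isC1 dM /\ isC1 dI /\ isC1 tau /\ isC1 p)
  (Hper : periodic T DM /\ periodic T DI /\ periodic T dM /\ periodic T dI /\
          periodic T tau /\ periodic T p)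
  (HD : forall t, 0 <= DM t /\ 0 <= DI t)
  (Hd : forall t, 0 < dM t /\ 0 < dI t)
  (Htau : forall t, 0 < tau t)
  (Hp : forall t, 0 <= p t)
  (Htau' : forall t, Derive tau t < 1)
  (* the times alpha, beta, t_alpha, t_beta *)
  (Hab : 0 < alpha /\ alpha <= beta /\ beta < ta /\ ta <= tb /\ tb < T)
  (Hta : ta - tau ta = alpha) (Htb : tb - tau tb = beta)
  (Hp0 : forall t, (0 <= t <= alpha \/ beta <= t <= T) -> p t = 0)
  (* birth function h (C^1, only its values on [0,oo) matter) *)
  (Hh1 : isC1 h)
  (Hh0 : h 0 = 0)
  (Hhpos : forall z, 0 <= z -> 0 <= h z)
  (Hhinf : is_lim h p_infty 0)
  (Hzstar : 0 < zstar)
  (Hhinc : forall z1 z2, 0 <= z1 -> z1 < z2 -> z2 < zstar -> h z1 < h z2)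
  (Hhdec : forall z1 z2, zstar <= z1 -> z1 < z2 -> h z2 < h z1)
  (Hhsub : forall lam z, 0 < lam < 1 -> 0 <= z -> lam * h z <= h (lam * z))
  (HL : 1 < Lconst T DI dI DM dM tau p h ta tb)
  (* u*, \bar u, c* *)
  (Hustar : min_pos_fix T DM dM DI dI tau p h ustar)
  (Hhmono : forall z1 z2, 0 <= z1 -> z1 <= z2 -> z2 <= ustar -> h z1 <= h z2)
  (Hubar : SolU DM dM DI dI tau p h (fun _ => ustar) (fun t _ => ubar t))
  (Hcstar : 0 < cstar)
  (Hspeed : spreading_speed T DM dM DI dI tau p h ustar cstar)
  (* u is a solution spreading with speed c*/T *)
  (Hu : SolU DM dM DI dI tau p h (u 0) u)
  (Hu_out : forall c, cstar / T < c -> forall eps, 0 < eps -> exists t0,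
      forall t x, t0 <= t -> c * t <= Rabs x -> Rabs (u t x) <= eps)
  (Hu_in : forall c, 0 < c < cstar / T -> forall eps, 0 < eps -> exists t0,
      forall t x, t0 <= t -> Rabs x <= c * t -> Rabs (u t x - ubar t) <= eps)
  (* v solves the v-equation with bounded initial value *)
  (Hv0 : exists M, forall x, Rabs (v0 x) <= M)
  (Hv : SolV DI dI tau p h u v0 v) :
  (forall c, cstar / T < c -> forall eps, 0 < eps -> exists t0,
      forall t x, t0 <= t -> c * t <= Rabs x -> Rabs (v t x) <= eps) /\
  (forall c, 0 < c < cstar / T -> forall eps, 0 < eps -> exists t0,
      forall t x, t0 <= t -> Rabs x <= c * t ->
        Rabs (v t x - vbar DI dI tau p h ubar t) <= eps).
Proof.
  (* The shape of h, L, u*, c* and the spreading speed of Q are only needed to make u spread,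
     which is assumed here through [Hu_out] and [Hu_in]. *)
  destruct HC1 as (_ & C1DI & _ & C1dI & C1tau & C1p).
  destruct Hper as (_ & PDI & _ & PdI & Ptau & Pp).
  destruct Hab as (_ & _ & _ & _ & HtbT).
  apply (v_spreading T (cstar / T) DI dI tau p h u v v0 ubar); auto.
  - apply Rdiv_lt_0_compat; auto.
  - intros; apply HD.
  - intros; apply Hd.
  - apply (delayed_birth_rate_before_0 T beta tb); auto.
  - apply (admissible_of_SolU DM dM DI dI tau p h (u 0)); auto.
  - apply (admissible_of_SolU DM dM DI dI tau p h (fun _ => ustar)); auto.
Qed.
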